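(* Let $U\subset\mathbb R^n$ be open, $X$ a $C^1$ vector field on $U$, and $V:U\to\mathbb R$ a $C^2$ function satisfying A1, A2, and either A3 or A3$'$ (for A3$'$ assume $X,V$ are $C^\infty$). Then $V^{-1}(0)$ is uniformly asymptotically stable for the system $\dot x = X(x)-\nabla V(x)$.
   Context: (A1) $V\ge0$ on $U$, $V^{-1}(0)\ne\emptyset$, $\nabla V\cdot X=0$ on $U$. (A2) $c>0$ is such that $V^{-1}([0,c])$ is a compact subset of $U$. (A3) The set of critical points of $V$ in $V^{-1}([0,c])$ equals $V^{-1}(0)$. (A3$'$) With $X^0g=g$, $X^kg=X\cdot\nabla(X^{k-1}g)$ and $S=\{x\in U: X^k\partial V/\partial x^i(x)=0\ \forall k\ge0,\,1\le i\le n\}$, one has $S\cap V^{-1}([0,c])\subset V^{-1}(0)$. For nonempty compact $\Lambda\subset\mathbb R^n$, $\operatorname{dist}(x,\Lambda)=\inf_{a\in\Lambda}|x-a|$ and $S(\Lambda,r)=\{x:\operatorname{dist}(x,\Lambda)<r\}$. Let $x(t;x_0)$ be the solution with $x(0)=x_0$. $\Lambda$ is uniformly stable if for each $\epsilon>0$ there is $\delta>0$ with $x_0\in S(\Lambda,\delta),\ t\ge0\Rightarrow x(t;x_0)\in S(\Lambda,\epsilon)$. $\Lambda$ is uniformly asymptotically stable if it is positively invariant and uniformly stable and there is $\delta_0>0$ and for each $\epsilon>0$ a $T(\epsilon)>0$ with $x_0\in S(\Lambda,\delta_0),\ t\ge T(\epsilon)\Rightarrow x(t;x_0)\in S(\Lambda,\epsilon)$.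 *)

From Stdlib Require Import Reals Lra ClassicalEpsilon.
From Stdlib Require Fin.
Open Scope R_scope.

Definition vec (n : nat) := Fin.t n -> R.

Fixpoint fsum (n : nat) : (Fin.t n -> R) -> R :=
  match n return (Fin.t n -> R) -> R with
  | O => fun _ => 0
  | S m => fun f => f Fin.F1 + fsum m (fun i => f (Fin.FS i))
  end.

Definition vsub {n} (x y : vec n) : vec n := fun i => x i - y i.
Definition dot {n} (x y : vec n) : R := fsum n (fun i => x i * y i).
Definition norm {n} (x : vec n) : R := sqrt (fsum n (fun i => x i ^ 2)).

Definition upd {n} (x : vec n) (i : Fin.t n) (h : R) : vec n :=
  fun j => if Fin.eq_dec j i then x j + h else x j.

Definition has_partial {n} (f : vec n -> R) (i : Fin.t n) (x : vec n) (l : R) : Prop :=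
  derivable_pt_lim (fun h => f (upd x i h)) 0 l.

(* the i-th partial derivative (a chosen value; unique whenever it exists) *)
Definition pderiv {n} (f : vec n -> R) (i : Fin.t n) (x : vec n) : R :=
  epsilon (inhabits 0) (fun l => has_partial f i x l).

Definition grad {n} (f : vec n -> R) (x : vec n) : vec n := fun i => pderiv f i x.

Definition is_open {n} (U : vec n -> Prop) : Prop :=
  forall x, U x -> exists r, r > 0 /\ forall y, norm (vsub y x) < r -> U y.

Definition is_compact {n} (K : vec n -> Prop) : Prop :=
  forall (I : Type) (O : I -> vec n -> Prop),
    (forall i, is_open (O i)) ->
    (forall x, K x -> exists i, O i x) ->
    exists l : list I, forall x, K x -> exists i, List.In i l /\ O i x.

Definition continuous_on {n} (U : vec n -> Prop) (g : vec n -> R) : Prop :=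
  forall x, U x -> forall eps, eps > 0 -> exists del, del > 0 /\
    forall y, U y -> norm (vsub y x) < del -> Rabs (g y - g x) < eps.

Fixpoint Ck {n} (k : nat) (U : vec n -> Prop) (f : vec n -> R) : Prop :=
  match k with
  | O => continuous_on U f
  | S k' => continuous_on U f /\
      exists D : Fin.t n -> vec n -> R,
        (forall i x, U x -> has_partial f i x (D i x)) /\
        (forall i, Ck k' U (D i))
  end.

Definition Cinf {n} (U : vec n -> Prop) (f : vec n -> R) : Prop := forall k, Ck k U f.

Definition Ck_field {n} (k : nat) (U : vec n -> Prop) (X : vec n -> vec n) : Prop :=
  forall i, Ck k U (fun x => X x i).
Definition Cinf_field {n} (U : vec n -> Prop) (X : vec n -> vec n) : Prop :=
  forall i, Cinf U (fun x => X x i).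

Fixpoint lie {n} (X : vec n -> vec n) (k : nat) (g : vec n -> R) : vec n -> R :=
  match k with
  | O => g
  | S k' => fun x => dot (X x) (grad (lie X k' g) x)
  end.

(* S(Lambda, r) = { x : dist(x, Lambda) < r }; for nonempty Lambda,
   inf_{a in Lambda} |x - a| < r  iff  some a in Lambda has |x - a| < r *)
Definition nbhd {n} (L : vec n -> Prop) (r : R) (x : vec n) : Prop :=
  exists a, L a /\ norm (vsub x a) < r.

Definition is_solution {n} (U : vec n -> Prop) (F : vec n -> vec n)
    (x0 : vec n) (x : R -> vec n) : Prop :=
  x 0 = x0 /\
  forall t, 0 <= t -> U (x t) /\
    forall i, derivable_pt_lim (fun s => x s i) t (F (x t) i).

Definition all_sol {n} (U : vec n -> Prop) (F : vec n -> vec n) (x0 : vec n)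
    (P : (R -> vec n) -> Prop) : Prop :=
  (exists x, is_solution U F x0 x) /\ forall x, is_solution U F x0 x -> P x.

Definition positively_invariant {n} U F (L : vec n -> Prop) : Prop :=
  forall x0, L x0 -> all_sol U F x0 (fun x => forall t, 0 <= t -> L (x t)).

Definition uniformly_stable {n} U F (L : vec n -> Prop) : Prop :=
  forall eps, eps > 0 -> exists del, del > 0 /\
    forall x0, nbhd L del x0 ->
      all_sol U F x0 (fun x => forall t, 0 <= t -> nbhd L eps (x t)).

Definition uniformly_asymptotically_stable {n} U F (L : vec n -> Prop) : Prop :=
  positively_invariant U F L /\ uniformly_stable U F L /\
  exists del0, del0 > 0 /\
    forall eps, eps > 0 -> exists T, T > 0 /\
      forall x0, nbhd L del0 x0 ->
        all_sol U F x0 (fun x => forall t, T <= t -> nbhd L eps (x t)).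

(* Since [grad V] is orthogonal to [X], along [x' = X - grad V] one has
   [dV/dt = - |grad V|^2 <= 0], so solutions starting in the compact sublevel set
   [{V <= c}] never leave it; they exist for all [t >= 0] by Picard iteration for a
   globally Lipschitz (McShane) extension of the field, which is Lipschitz on compacts.
   Stability: points near [V^-1(0)] have small [V], and by compactness small [V] forces
   closeness to [V^-1(0)]. Attraction: by A3 (or A3', through the Lie derivatives
   [X^k dV/dx^i]) [V] is constant on no trajectory with [V > 0], so it drops strictly in
   unit time; continuous dependence and compactness make the drop uniform on
   [{eta <= V <= c/2}], which bounds the time needed to reach [{V < eta}]. *)

From Stdlib Require Import Reals Ranalysis5 Lra Psatz List Arith.
From Stdlib Require Import Classical ClassicalEpsilon FunctionalExtensionality.
From Coquelicot Require Import Coquelicot.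
Open Scope R_scope.

Lemma fsum_ext n (f g : Fin.t n -> R) : (forall i, f i = g i) -> fsum n f = fsum n g.
Proof.
  revert f g; induction n; intros f g H; simpl; auto.
  rewrite H, (IHn (fun i => f (Fin.FS i)) (fun i => g (Fin.FS i))); auto.
Qed.

Lemma fsum_plus n (f g : Fin.t n -> R) : fsum n (fun i => f i + g i) = fsum n f + fsum n g.
Proof.
  revert f g; induction n; intros f g; simpl; [lra|].
  rewrite (IHn (fun i => f (Fin.FS i)) (fun i => g (Fin.FS i))); lra.
Qed.

Lemma fsum_scal n c (f : Fin.t n -> R) : fsum n (fun i => c * f i) = c * fsum n f.
Proof.
  revert f; induction n; intros f; simpl; [lra|].
  rewrite (IHn (fun i => f (Fin.FS i))); lra.
Qed.

Lemma fsum_opp n (f : Fin.t n -> R) : fsum n (fun i => - f i) = - fsum n f.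
Proof.
  revert f; induction n; intros f; simpl; [lra|].
  rewrite (IHn (fun i => f (Fin.FS i))); lra.
Qed.

Lemma fsum_minus n (f g : Fin.t n -> R) : fsum n (fun i => f i - g i) = fsum n f - fsum n g.
Proof. unfold Rminus. rewrite fsum_plus, fsum_opp. lra. Qed.

Lemma fsum_zero n : fsum n (fun _ => 0) = 0.
Proof. induction n; simpl; auto. rewrite IHn; lra. Qed.

Lemma fsum_le n (f g : Fin.t n -> R) : (forall i, f i <= g i) -> fsum n f <= fsum n g.
Proof.
  revert f g; induction n; intros f g H; simpl; [lra|].
  assert (fsum n (fun i => f (Fin.FS i)) <= fsum n (fun i => g (Fin.FS i)))
    by (apply IHn; intros; apply H).
  specialize (H Fin.F1). lra.
Qed.

Lemma fsum_nonneg n (f : Fin.t n -> R) : (forall i, 0 <= f i) -> 0 <= fsum n f.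
Proof. intros H. rewrite <- (fsum_zero n). apply fsum_le; auto. Qed.

Lemma fsum_ge_term n (f : Fin.t n -> R) i : (forall j, 0 <= f j) -> f i <= fsum n f.
Proof.
  revert f i; induction n; intros f i H. inversion i.
  simpl. revert f H. pattern i. apply Fin.caseS'.
  - intros f H. assert (0 <= fsum n (fun i => f (Fin.FS i))) by (apply fsum_nonneg; auto). lra.
  - intros p f H. assert (f (Fin.FS p) <= fsum n (fun i => f (Fin.FS i)))
      by (apply (IHn (fun i => f (Fin.FS i))); auto).
    specialize (H Fin.F1); lra.
Qed.

Lemma fsum_le_const n (f : Fin.t n -> R) M : (forall i, f i <= M) -> fsum n f <= INR n * M.
Proof.
  revert f; induction n; intros f H; cbn [fsum]. simpl; lra.
  assert (fsum n (fun i => f (Fin.FS i)) <= INR n * M) by (apply IHn; auto).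
  specialize (H Fin.F1). rewrite S_INR. lra.
Qed.

Lemma Rabs_fsum_le n (f : Fin.t n -> R) : Rabs (fsum n f) <= fsum n (fun i => Rabs (f i)).
Proof.
  revert f; induction n; intros f; simpl. rewrite Rabs_R0; lra.
  eapply Rle_trans. apply Rabs_triang. specialize (IHn (fun i => f (Fin.FS i))). lra.
Qed.

Lemma fsum_single n (i : Fin.t n) a : fsum n (fun j => if Fin.eq_dec j i then a else 0) = a.
Proof.
  induction n. inversion i.
  cbn [fsum]. revert IHn. pattern i. apply Fin.caseS'.
  - intros _. destruct (Fin.eq_dec Fin.F1 Fin.F1); [|congruence].
    rewrite (fsum_ext n _ (fun _ => 0)), fsum_zero; [ring|].
    intros j. destruct (Fin.eq_dec (Fin.FS j) Fin.F1); [discriminate|auto].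
  - intros p IH. destruct (Fin.eq_dec Fin.F1 (Fin.FS p)); [discriminate|].
    rewrite (fsum_ext n _ (fun j => if Fin.eq_dec j p then a else 0)), (IH p); [ring|].
    intros j. destruct (Fin.eq_dec (Fin.FS j) (Fin.FS p)), (Fin.eq_dec j p); auto.
    + apply Fin.FS_inj in e; congruence.
    + subst; congruence.
Qed.

Lemma fin_common_radius n (P : Fin.t n -> R -> Prop) :
  (forall i d d', 0 < d' <= d -> P i d -> P i d') ->
  (forall i, exists d, d > 0 /\ P i d) -> exists d, d > 0 /\ forall i, P i d.
Proof.
  revert P; induction n; intros P Hm H.
  - exists 1. split. lra. intros i; inversion i.
  - destruct (H Fin.F1) as [d1 [Hd1 P1]].
    destruct (IHn (fun i => P (Fin.FS i))) as [d2 [Hd2 P2]].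
    + intros; eapply Hm; eauto.
    + intros; apply H.
    + exists (Rmin d1 d2). split. apply Rmin_glb_lt; auto.
      intros i. pattern i. apply Fin.caseS'.
      * eapply Hm; [|exact P1]. split. apply Rmin_glb_lt; auto. apply Rmin_l.
      * intros p. eapply Hm; [|exact (P2 p)]. split. apply Rmin_glb_lt; auto. apply Rmin_r.
Qed.

Definition sumsq {n} (x : vec n) : R := fsum n (fun i => x i ^ 2).
Definition vadd {n} (x y : vec n) : vec n := fun i => x i + y i.

Lemma sumsq_nonneg {n} (x : vec n) : 0 <= sumsq x.
Proof. apply fsum_nonneg. intros; apply pow2_ge_0. Qed.

Lemma sumsq_eq0 {n} (x : vec n) : sumsq x = 0 -> forall i, x i = 0.
Proof.
  intros H i. pose proof (fsum_ge_term n (fun i => x i ^ 2) i (fun j => pow2_ge_0 (x j))).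
  fold (sumsq x) in H0. rewrite H in H0. pose proof (pow2_ge_0 (x i)). nra.
Qed.

Lemma sumsq_add {n} (x y : vec n) : sumsq (vadd x y) = sumsq x + 2 * dot x y + sumsq y.
Proof.
  unfold sumsq, dot, vadd. rewrite <- fsum_scal, <- !fsum_plus. apply fsum_ext; intros; ring.
Qed.

Lemma sqrt_le_pow2 x r : 0 <= x -> 0 <= r -> x <= r ^ 2 -> sqrt x <= r.
Proof. intros H1 H2 H3. rewrite <- (sqrt_pow2 r H2). apply sqrt_le_1_alt; auto. Qed.

Lemma norm_nonneg {n} (x : vec n) : 0 <= norm x.
Proof. apply sqrt_pos. Qed.

Lemma norm_sq {n} (x : vec n) : norm x ^ 2 = sumsq x.
Proof. unfold norm. rewrite pow2_sqrt; auto. apply sumsq_nonneg. Qed.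

Lemma norm_le_sq {n} (x : vec n) r : 0 <= r -> sumsq x <= r ^ 2 -> norm x <= r.
Proof. intros H1 H2. apply sqrt_le_pow2; auto. apply sumsq_nonneg. Qed.

Lemma norm_lt_sq {n} (x : vec n) r : 0 <= r -> sumsq x < r ^ 2 -> norm x < r.
Proof.
  intros H1 H2. unfold norm. rewrite <- (sqrt_pow2 r H1). apply sqrt_lt_1_alt.
  split; auto. apply sumsq_nonneg.
Qed.

Lemma Rabs_coord_le_norm {n} (x : vec n) i : Rabs (x i) <= norm x.
Proof.
  unfold norm. rewrite <- sqrt_Rsqr_abs. apply sqrt_le_1_alt.
  unfold Rsqr. replace (x i * x i) with (x i ^ 2) by ring.
  apply (fsum_ge_term n (fun i => x i ^ 2)). intros; apply pow2_ge_0.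
Qed.

Lemma norm_le_sum_abs {n} (x : vec n) : norm x <= fsum n (fun i => Rabs (x i)).
Proof.
  apply norm_le_sq; [apply fsum_nonneg; intros; apply Rabs_pos|].
  unfold sumsq. revert x; induction n; intros x; cbn [fsum]; [lra|].
  specialize (IHn (fun i => x (Fin.FS i))).
  assert (0 <= fsum n (fun i => Rabs (x (Fin.FS i)))) by (apply fsum_nonneg; intros; apply Rabs_pos).
  pose proof (Rabs_pos (x Fin.F1)). rewrite <- (pow2_abs (x Fin.F1)). nra.
Qed.

Lemma norm_le_coord_bound {n} (x : vec n) M :
  (forall i, Rabs (x i) <= M) -> norm x <= INR n * M.
Proof. intros H. eapply Rle_trans. apply norm_le_sum_abs. apply fsum_le_const; auto. Qed.

Lemma norm_le_coordwise {n} (x y : vec n) :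
  (forall i, Rabs (x i) <= Rabs (y i)) -> norm x <= norm y.
Proof.
  intros H. apply sqrt_le_1_alt, fsum_le. intros i.
  rewrite <- (pow2_abs (x i)), <- (pow2_abs (y i)).
  specialize (H i). pose proof (Rabs_pos (x i)). nra.
Qed.

Lemma cauchy_schwarz_step (a b S A B : R) : 0 <= A -> 0 <= B -> S ^ 2 <= A * B ->
  (a * b + S) ^ 2 <= (a ^ 2 + A) * (b ^ 2 + B).
Proof.
  intros HA HB HS.
  assert (H1 : 2 * a * b * S <= a ^ 2 * B + b ^ 2 * A).
  { assert ((2 * a * b * S) ^ 2 <= (a ^ 2 * B + b ^ 2 * A) ^ 2).
    { assert (0 <= a ^ 2 * b ^ 2) by nra.
      assert (4 * (a ^ 2 * b ^ 2) * S ^ 2 <= 4 * (a ^ 2 * b ^ 2) * (A * B))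
        by (apply Rmult_le_compat_l; nra).
      pose proof (pow2_ge_0 (a ^ 2 * B - b ^ 2 * A)). nra. }
    destruct (Rle_dec (2 * a * b * S) 0). nra.
    apply Rsqr_incr_0_var; unfold Rsqr; nra. }
  nra.
Qed.

Lemma dot_le_norm {n} (x y : vec n) : dot x y <= norm x * norm y.
Proof.
  assert (CS : (dot x y) ^ 2 <= sumsq x * sumsq y).
  { unfold dot, sumsq. induction n; simpl; [lra|].
    apply cauchy_schwarz_step; [apply (sumsq_nonneg (fun i => x (Fin.FS i)))
      | apply (sumsq_nonneg (fun i => y (Fin.FS i))) | apply IHn]. }
  rewrite <- !norm_sq in CS.
  pose proof (norm_nonneg x); pose proof (norm_nonneg y).
  destruct (Rle_dec (dot x y) 0). nra.
  apply Rsqr_incr_0_var; unfold Rsqr; nra.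
Qed.

Lemma norm_add {n} (x y : vec n) : norm (vadd x y) <= norm x + norm y.
Proof.
  pose proof (norm_nonneg x); pose proof (norm_nonneg y).
  apply norm_le_sq. lra. rewrite sumsq_add, <- !norm_sq. pose proof (dot_le_norm x y). nra.
Qed.

Lemma norm_triang {n} (x y z : vec n) : norm (vsub x z) <= norm (vsub x y) + norm (vsub y z).
Proof.
  replace (vsub x z) with (vadd (vsub x y) (vsub y z)). apply norm_add.
  apply functional_extensionality; intros; unfold vadd, vsub; ring.
Qed.

Lemma norm_vsub_sym {n} (x y : vec n) : norm (vsub x y) = norm (vsub y x).
Proof. unfold norm. f_equal. apply fsum_ext. intros. unfold vsub. ring. Qed.

Lemma norm_vsub_diag {n} (x : vec n) : norm (vsub x x) = 0.
Proof.
  unfold norm. rewrite (fsum_ext n _ (fun _ => 0)), fsum_zero. apply sqrt_0.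
  intros; unfold vsub; ring.
Qed.

Lemma norm_vsub_le {n} (a b : vec n) : norm (vsub a b) <= norm a + norm b.
Proof.
  pose proof (norm_triang a (fun _ => 0) b) as H.
  rewrite (norm_vsub_sym (fun _ => 0) b) in H.
  replace (vsub a (fun _ => 0)) with a in H
    by (apply functional_extensionality; intros; unfold vsub; ring).
  replace (vsub b (fun _ => 0)) with b in H
    by (apply functional_extensionality; intros; unfold vsub; ring).
  auto.
Qed.

Lemma norm_vsub_eq0 {n} (x y : vec n) : norm (vsub x y) = 0 -> x = y.
Proof.
  intros H. apply functional_extensionality. intros i.
  pose proof (Rabs_coord_le_norm (vsub x y) i). rewrite H in H0. unfold vsub in H0.
  pose proof (Rabs_pos (x i - y i)).
  destruct (Rcase_abs (x i - y i));
    [rewrite Rabs_left in H0|rewrite Rabs_right in H0]; lra.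
Qed.

Lemma norm_upd {n} (x : vec n) i h : norm (vsub (upd x i h) x) = Rabs h.
Proof.
  unfold norm. rewrite (fsum_ext n _ (fun j => if Fin.eq_dec j i then h ^ 2 else 0)).
  - rewrite fsum_single, <- sqrt_Rsqr_abs. unfold Rsqr. f_equal. ring.
  - intros j. unfold vsub, upd. destruct (Fin.eq_dec j i); ring.
Qed.

Definition minl {I : Type} (f : I -> R) (l : list I) : R :=
  fold_right (fun i acc => Rmin (f i) acc) 1 l.

Lemma minl_pos {I} (f : I -> R) l : (forall i, f i > 0) -> minl f l > 0.
Proof. intros H; induction l; simpl. lra. apply Rmin_glb_lt; auto. apply H. Qed.

Lemma minl_le {I} (f : I -> R) l i : In i l -> minl f l <= f i.
Proof.
  induction l; simpl. tauto. intros [->|H]. apply Rmin_l.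
  eapply Rle_trans. apply Rmin_r. auto.
Qed.

Lemma is_open_ball {n} (c : vec n) r : is_open (fun y => norm (vsub y c) < r).
Proof.
  intros x Hx. exists (r - norm (vsub x c)). split. lra.
  intros y Hy. pose proof (norm_triang y x c). lra.
Qed.

(* Lebesgue-number argument: finitely many of the half-radius balls cover [C]. *)
Lemma compact_uniform_nbhd {n} (C : vec n -> Prop) (P : R -> vec n -> Prop) :
  is_compact C ->
  (forall m m' y, 0 < m' <= m -> P m y -> P m' y) ->
  (forall x, C x -> exists r m, r > 0 /\ m > 0 /\ forall y, norm (vsub y x) < r -> P m y) ->
  exists d m, d > 0 /\ m > 0 /\ forall x y, C x -> norm (vsub y x) < d -> P m y.
Proof.
  intros HC Hmon Hloc.
  set (I := {x | C x}).
  assert (Hch : forall i : I, {p : R * R | fst p > 0 /\ snd p > 0 /\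
       forall y, norm (vsub y (proj1_sig i)) < fst p -> P (snd p) y}).
  { intros [x Hx]. apply constructive_indefinite_description.
    destruct (Hloc x Hx) as (r & m & Hr & Hm & H). exists (r, m); simpl; auto. }
  set (rr := fun i => fst (proj1_sig (Hch i))).
  set (mm := fun i => snd (proj1_sig (Hch i))).
  assert (Hrr : forall i, rr i > 0) by (intros i; apply (proj2_sig (Hch i))).
  assert (Hmm : forall i, mm i > 0) by (intros i; apply (proj2_sig (Hch i))).
  destruct (HC I (fun i y => norm (vsub y (proj1_sig i)) < rr i / 2)) as [l Hl].
  - intros i; apply is_open_ball.
  - intros x Hx. exists (exist _ x Hx).
    change (norm (vsub x x) < rr (exist _ x Hx) / 2). rewrite norm_vsub_diag.
    specialize (Hrr (exist _ x Hx)). lra.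
  - exists (minl (fun i => rr i / 2) l), (minl mm l). split; [|split].
    + apply minl_pos. intros i. specialize (Hrr i). lra.
    + apply minl_pos. auto.
    + intros x y Hx Hy. destruct (Hl x Hx) as [i [Hi Hxi]].
      pose proof (minl_le (fun i => rr i / 2) l i Hi). simpl in H.
      pose proof (minl_le mm l i Hi).
      destruct (proj2_sig (Hch i)) as (H1 & H2 & H3).
      apply Hmon with (mm i). { split; auto. apply minl_pos; auto. }
      apply H3. pose proof (norm_triang y x (proj1_sig i)). fold (rr i). lra.
Qed.

Lemma compact_apart {n} (C : vec n -> Prop) z : is_compact C -> ~ C z ->
  exists r, r > 0 /\ forall w, C w -> r <= norm (vsub w z).
Proof.
  intros HC Hz.
  destruct (compact_uniform_nbhd C (fun m y => m <= norm (vsub y z)) HC) as (d & m & Hd & Hm & H).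
  - intros; lra.
  - intros x Hx. assert (norm (vsub x z) <> 0).
    { intro E. apply norm_vsub_eq0 in E. subst; auto. }
    pose proof (norm_nonneg (vsub x z)).
    exists (norm (vsub x z) / 2), (norm (vsub x z) / 2). split; [lra|split;[lra|]].
    intros y Hy. pose proof (norm_triang x y z). rewrite norm_vsub_sym in Hy. lra.
  - exists m. split; auto. intros w Hw. apply (H w w Hw). rewrite norm_vsub_diag; lra.
Qed.

Lemma is_compact_ext {n} (C D : vec n -> Prop) :
  (forall x, C x <-> D x) -> is_compact C -> is_compact D.
Proof.
  intros E HC I O HO Hcov. destruct (HC I O HO) as [l Hl].
  - intros x Hx; apply Hcov, E; auto.
  - exists l. intros x Hx; apply Hl, E; auto.
Qed.

Lemma is_compact_restrict {n} (C P : vec n -> Prop) : is_compact C ->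
  (forall x, C x -> ~ P x -> exists r, r > 0 /\ forall y, norm (vsub y x) < r -> ~ P y) ->
  is_compact (fun x => C x /\ P x).
Proof.
  intros HC Hsep I O HO Hcov.
  set (W := fun y => exists r, r > 0 /\ forall z, norm (vsub z y) < r -> ~ P z).
  set (O' := fun (j : option I) => match j with Some i => O i | None => W end).
  destruct (HC (option I) O') as [l' Hl'].
  - intros [i|]; simpl; auto. intros y [r [Hr Hy]].
    exists r. split; auto. intros y' Hy'. exists (r - norm (vsub y' y)). split. lra.
    intros z Hz. apply Hy. pose proof (norm_triang z y' y). lra.
  - intros x Hx. destruct (classic (P x)).
    + destruct (Hcov x (conj Hx H)) as [i Hi]. exists (Some i); auto.
    + exists None. simpl. apply Hsep; auto.
  - exists (flat_map (fun o => match o with Some i => i :: nil | None => nil end) l').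
    intros x [Hx Px]. destruct (Hl' x Hx) as [[i|] [Hin Hi]].
    + exists i. split; auto. apply in_flat_map. exists (Some i). simpl; auto.
    + destruct Hi as [r [Hr Hi]]. exfalso. apply (Hi x); auto. rewrite norm_vsub_diag; lra.
Qed.

Definition fin_val {n} (i : Fin.t n) : nat := proj1_sig (Fin.to_nat i).

Lemma fin_val_FS n (i : Fin.t n) : fin_val (Fin.FS i) = S (fin_val i).
Proof. unfold fin_val. simpl. destruct (Fin.to_nat i); reflexivity. Qed.

Lemma fin_val_lt n (i : Fin.t n) : (fin_val i < n)%nat.
Proof. unfold fin_val. destruct (Fin.to_nat i); simpl; auto. Qed.

Lemma fsum_telescope n (h : nat -> R) :
  fsum n (fun i => h (S (fin_val i)) - h (fin_val i)) = h n - h 0%nat.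
Proof.
  revert h; induction n; intros h. simpl; lra.
  cbn [fsum]. pose proof (IHn (fun k => h (S k))) as E. simpl in E.
  rewrite (fsum_ext n _ (fun i => h (S (S (fin_val i))) - h (S (fin_val i)))).
  - rewrite E. change (fin_val (@Fin.F1 n)) with 0%nat. lra.
  - intros i. rewrite fin_val_FS. reflexivity.
Qed.

(* Vertices of the coordinate path from [x] to [w]. *)
Definition mix {n} (k : nat) (x w : vec n) : vec n :=
  fun j => if lt_dec (fin_val j) k then w j else x j.

Lemma mix_0 {n} (x w : vec n) : mix 0 x w = x.
Proof.
  apply functional_extensionality; intros j; unfold mix. destruct (lt_dec _ _); [lia|auto].
Qed.

Lemma mix_n {n} (x w : vec n) : mix n x w = w.
Proof.
  apply functional_extensionality; intros j; unfold mix.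
  pose proof (fin_val_lt n j). destruct (lt_dec _ _); [auto|lia].
Qed.

Lemma mix_S {n} (x w : vec n) i : mix (S (fin_val i)) x w = upd (mix (fin_val i) x w) i (w i - x i).
Proof.
  apply functional_extensionality; intros j; unfold mix, upd.
  destruct (Fin.eq_dec j i) as [->|Hne].
  - destruct (lt_dec (fin_val i) (S (fin_val i))); [|lia]. destruct (lt_dec (fin_val i) (fin_val i)); [lia|]. ring.
  - assert (fin_val j <> fin_val i) by (intro E; apply Hne, Fin.to_nat_inj, E).
    destruct (lt_dec (fin_val j) (S (fin_val i))); destruct (lt_dec (fin_val j) (fin_val i)); auto; lia.
Qed.

Lemma upd_upd {n} (m : vec n) i a b : upd (upd m i a) i b = upd m i (a + b).
Proof. apply functional_extensionality; intros j; unfold upd. destruct (Fin.eq_dec j i); ring. Qed.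

Lemma upd_0 {n} (m : vec n) i : upd m i 0 = m.
Proof. apply functional_extensionality; intros j; unfold upd. destruct (Fin.eq_dec j i); ring. Qed.

Lemma norm_mix_upd_le {n} (x w : vec n) i c : Rabs c <= Rabs (w i - x i) ->
  norm (vsub (upd (mix (fin_val i) x w) i c) x) <= norm (vsub w x).
Proof.
  intros Hc. apply norm_le_coordwise. intros j. unfold vsub, upd, mix.
  destruct (Fin.eq_dec j i) as [->|Hne].
  - destruct (lt_dec (fin_val i) (fin_val i)); [lia|]. replace (x i + c - x i) with c by ring. auto.
  - destruct (lt_dec (fin_val j) (fin_val i)). lra.
    replace (x j - x j) with 0 by ring. rewrite Rabs_R0. apply Rabs_pos.
Qed.

Lemma has_partial_line {n} (f : vec n -> R) i m h l :
  has_partial f i (upd m i h) l -> derivable_pt_lim (fun s => f (upd m i s)) h l.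
Proof.
  intros H eps Heps. destruct (H eps Heps) as [d Hd]. exists d. intros k Hk Hkd.
  specialize (Hd k Hk Hkd). rewrite !upd_upd, Rplus_0_r, Rplus_0_l in Hd. exact Hd.
Qed.

Lemma MVT_from_0 (g g' : R -> R) d :
  (forall h, Rabs h <= Rabs d -> derivable_pt_lim g h (g' h)) ->
  exists c, Rabs c <= Rabs d /\ g d - g 0 = g' c * d.
Proof.
  intros H. destruct (Rtotal_order d 0) as [Hd|[Hd|Hd]].
  - destruct (MVT_cor2 g g' d 0 Hd) as [c [E Hc]].
    { intros c Hc. apply H. rewrite (Rabs_left d) by lra. apply Rabs_le. lra. }
    exists c. split. rewrite (Rabs_left d) by lra. apply Rabs_le. lra. lra.
  - subst. exists 0. split. lra. ring.
  - destruct (MVT_cor2 g g' 0 d Hd) as [c [E Hc]].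
    { intros c Hc. apply H. rewrite (Rabs_right d) by lra. apply Rabs_le. lra. }
    exists c. split. rewrite (Rabs_right d) by lra. apply Rabs_le. lra. lra.
Qed.

Lemma mean_value_coordinatewise {n} (U : vec n -> Prop) (f : vec n -> R)
    (D : Fin.t n -> vec n -> R) x w r :
  (forall i z, U z -> has_partial f i z (D i z)) ->
  (forall y, norm (vsub y x) < r -> U y) -> norm (vsub w x) < r ->
  exists xi : Fin.t n -> vec n, (forall i, norm (vsub (xi i) x) <= norm (vsub w x)) /\
    f w - f x = fsum n (fun i => D i (xi i) * (w i - x i)).
Proof.
  intros Hp Hb Hw.
  assert (Hi : forall i, exists c, Rabs c <= Rabs (w i - x i) /\
     f (upd (mix (fin_val i) x w) i (w i - x i)) - f (upd (mix (fin_val i) x w) i 0) =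
     D i (upd (mix (fin_val i) x w) i c) * (w i - x i)).
  { intros i. apply (MVT_from_0 (fun h => f (upd (mix (fin_val i) x w) i h))
                             (fun h => D i (upd (mix (fin_val i) x w) i h))).
    intros h Hh. apply has_partial_line, Hp, Hb.
    pose proof (norm_mix_upd_le x w i h Hh). lra. }
  apply choice in Hi as [cc Hcc].
  exists (fun i => upd (mix (fin_val i) x w) i (cc i)). split.
  - intros i. apply norm_mix_upd_le, Hcc.
  - rewrite <- (mix_n x w) at 1. rewrite <- (mix_0 x w) at 2.
    rewrite <- (fsum_telescope n (fun k => f (mix k x w))).
    apply fsum_ext. intros i. rewrite mix_S. rewrite <- (upd_0 (mix (fin_val i) x w) i) at 2. apply Hcc.
Qed.

Lemma lipschitz_of_partials_bound {n} (U : vec n -> Prop) (f : vec n -> R) D x w r M :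
  (forall i z, U z -> has_partial f i z (D i z)) ->
  (forall y, norm (vsub y x) < r -> U y /\ forall i, Rabs (D i y) <= M) ->
  norm (vsub w x) < r -> Rabs (f w - f x) <= INR n * M * norm (vsub w x).
Proof.
  intros Hp Hb Hw.
  destruct (mean_value_coordinatewise U f D x w r Hp) as [xi [Hxi ->]]; auto.
  { intros y Hy; apply Hb; auto. }
  eapply Rle_trans. apply Rabs_fsum_le.
  rewrite Rmult_assoc. apply fsum_le_const. intros i. rewrite Rabs_mult.
  apply Rmult_le_compat; try apply Rabs_pos.
  - apply Hb. pose proof (Hxi i). lra.
  - apply (Rabs_coord_le_norm (vsub w x) i).
Qed.

Lemma fsum_mult_perturb n (a a' b b' : Fin.t n -> R) e : e <= 1 ->
  (forall i, Rabs (a' i - a i) <= e) -> (forall i, Rabs (b' i - b i) <= e) ->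
  Rabs (fsum n (fun i => a' i * b' i) - fsum n (fun i => a i * b i))
    <= e * fsum n (fun i => Rabs (b i) + 1 + Rabs (a i)).
Proof.
  intros He Ha Hb. rewrite <- fsum_minus, <- fsum_scal.
  eapply Rle_trans; [apply Rabs_fsum_le|]. apply fsum_le. intros i.
  replace (a' i * b' i - a i * b i) with ((a' i - a i) * b' i + a i * (b' i - b i)) by ring.
  eapply Rle_trans; [apply Rabs_triang|]. rewrite !Rabs_mult.
  specialize (Ha i). specialize (Hb i).
  pose proof (Rabs_triang_inv (b' i) (b i)). pose proof (Rabs_pos (a i)).
  assert (Rabs (a' i - a i) * Rabs (b' i) <= e * (Rabs (b i) + 1))
    by (apply Rmult_le_compat; try apply Rabs_pos; lra).
  assert (Rabs (a i) * Rabs (b' i - b i) <= e * Rabs (a i)) by nra.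
  lra.
Qed.

Lemma difference_quotients_near {n} (y : R -> vec n) y' t e : e > 0 ->
  (forall i, derivable_pt_lim (fun s => y s i) t (y' i)) ->
  exists d, d > 0 /\ forall h, h <> 0 -> Rabs h < d ->
    forall i, Rabs ((y (t + h) i - y t i) / h - y' i) < e.
Proof.
  intros He Hy.
  destruct (fin_common_radius n (fun i d => forall h, h <> 0 -> Rabs h < d ->
      Rabs ((y (t + h) i - y t i) / h - y' i) < e)) as [d [Hd Hq]].
  - intros i d d' Hd' H h Hh Hhd. apply H; auto. lra.
  - intros i. destruct (Hy i e He) as [d Hd]. exists d. split; [apply cond_pos|exact Hd].
  - exists d. split; auto.
Qed.

Lemma small_factor A eps : 0 <= A -> eps > 0 -> exists e, e > 0 /\ e <= 1 /\ e * A < eps.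
Proof.
  intros HA Heps. exists (Rmin 1 (eps / (A + 1))). split; [|split].
  - apply Rmin_glb_lt; [lra|apply Rdiv_lt_0_compat; lra].
  - apply Rmin_l.
  - assert (Rmin 1 (eps / (A + 1)) <= eps / (A + 1)) by apply Rmin_r.
    assert (0 < Rmin 1 (eps / (A + 1))) by (apply Rmin_glb_lt; [lra|apply Rdiv_lt_0_compat; lra]).
    apply Rle_lt_trans with (eps / (A + 1) * A); [apply Rmult_le_compat_r; lra|].
    apply (Rmult_lt_reg_r (A + 1)); [lra|]. field_simplify; nra.
Qed.

Lemma chain_rule_estimate {n} (U : vec n -> Prop) (f : vec n -> R) D x w y' h r e :
  (forall i z, U z -> has_partial f i z (D i z)) ->
  (forall z, norm (vsub z x) < r -> U z /\ forall i, Rabs (D i z - D i x) < e) ->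
  norm (vsub w x) < r -> h <> 0 -> e <= 1 ->
  (forall i, Rabs ((w i - x i) / h - y' i) < e) ->
  Rabs ((f w - f x) / h - fsum n (fun i => D i x * y' i))
    <= e * fsum n (fun i => Rabs (y' i) + 1 + Rabs (D i x)).
Proof.
  intros Hp Hball Hw Hh He1 Hq.
  destruct (mean_value_coordinatewise U f D x w r Hp) as [xi [Hxi E]]; auto.
  { intros z Hz. apply Hball, Hz. }
  replace ((f w - f x) / h) with (fsum n (fun i => D i (xi i) * ((w i - x i) / h))).
  - apply fsum_mult_perturb; auto; intros i; left; [|apply Hq].
    apply Hball. pose proof (Hxi i). lra.
  - rewrite E. unfold Rdiv. rewrite Rmult_comm, <- fsum_scal. apply fsum_ext.
    intros i. field. auto.
Qed.

Lemma chain_rule {n} (U : vec n -> Prop) (f : vec n -> R) D (y : R -> vec n) y' t :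
  is_open U -> (forall i z, U z -> has_partial f i z (D i z)) ->
  (forall i, continuous_on U (D i)) ->
  U (y t) -> (forall i, derivable_pt_lim (fun s => y s i) t (y' i)) ->
  derivable_pt_lim (fun s => f (y s)) t (fsum n (fun i => D i (y t) * y' i)).
Proof.
  intros HU Hp Hc Hyt Hy eps Heps.
  set (x := y t).
  set (A := fsum n (fun i => Rabs (y' i) + 1 + Rabs (D i x))).
  assert (HA : 0 <= A)
    by (apply fsum_nonneg; intros i; pose proof (Rabs_pos (y' i)); pose proof (Rabs_pos (D i x)); lra).
  destruct (small_factor A eps HA Heps) as (e & He & He1 & HeA).
  destruct (difference_quotients_near y y' t e He Hy) as [dq [Hdq Hq]].
  destruct (HU x Hyt) as [r [Hr HrU]].
  destruct (fin_common_radius n (fun i d => forall z, U z -> norm (vsub z x) < d ->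
      Rabs (D i z - D i x) < e)) as [dD [HdD HD]].
  { intros i d d' Hd H z Hz Hzd. apply H; auto. lra. }
  { intros i. destruct (Hc i x Hyt e He) as [d [Hd H]]. exists d. split; auto. }
  set (m := Rmin r dD).
  assert (Hm : m > 0) by (apply Rmin_glb_lt; auto).
  assert (Hball : forall z, norm (vsub z x) < m -> U z /\ forall i, Rabs (D i z - D i x) < e).
  { intros z Hz. assert (m <= r) by apply Rmin_l. assert (m <= dD) by apply Rmin_r.
    assert (U z) by (apply HrU; lra). split; auto. intros i. apply HD; auto; lra. }
  assert (Hd : 0 < Rmin dq (m / (A + 1)))
    by (apply Rmin_glb_lt; auto; apply Rdiv_lt_0_compat; lra).
  exists (mkposreal _ Hd). simpl. intros h Hh Hhd.
  assert (Hh2 : Rabs h * (A + 1) < m).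
  { assert (Rabs h < m / (A + 1)) by (eapply Rlt_le_trans; [exact Hhd|apply Rmin_r]).
    apply (Rmult_lt_compat_r (A + 1)) in H; [|lra].
    unfold Rdiv in H. rewrite Rmult_assoc, Rinv_l in H by lra. lra. }
  assert (Hqh : forall i, Rabs ((y (t + h) i - x i) / h - y' i) < e).
  { intros i. apply Hq; auto. eapply Rlt_le_trans; [exact Hhd|apply Rmin_l]. }
  assert (Hwm : norm (vsub (y (t + h)) x) < m).
  { assert (norm (vsub (y (t + h)) x) <= Rabs h * A).
    { eapply Rle_trans. apply norm_le_sum_abs. unfold A. rewrite <- fsum_scal.
      apply fsum_le. intros i. unfold vsub.
      replace (y (t + h) i - x i) with (h * ((y (t + h) i - x i) / h)) by (field; auto).
      rewrite Rabs_mult. apply Rmult_le_compat_l. apply Rabs_pos.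
      pose proof (Hqh i). pose proof (Rabs_triang_inv ((y (t + h) i - x i) / h) (y' i)).
      pose proof (Rabs_pos (D i x)). lra. }
    pose proof (Rabs_pos h). nra. }
  eapply Rle_lt_trans; [|exact HeA].
  apply (chain_rule_estimate U f D x (y (t + h)) y' h m e); auto.
Qed.

Lemma pderiv_eq {n} (f : vec n -> R) i x l : has_partial f i x l -> pderiv f i x = l.
Proof.
  intros H. unfold pderiv.
  assert (E : exists l, has_partial f i x l) by eauto.
  eapply uniqueness_limite; [apply (epsilon_spec (inhabits 0) _ E)|exact H].
Qed.

Lemma has_partial_local {n} (U : vec n -> Prop) f g i x l : is_open U -> U x ->
  (forall y, U y -> f y = g y) -> has_partial f i x l -> has_partial g i x l.
Proof.
  intros HU Hx E H eps Heps. destruct (HU x Hx) as [r [Hr Hb]].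
  destruct (H eps Heps) as [d Hd].
  assert (Hm : 0 < Rmin d r) by (apply Rmin_glb_lt; auto; apply cond_pos).
  exists (mkposreal _ Hm). simpl. intros h Hh Hhd.
  assert (Hh1 : Rabs h < d) by (eapply Rlt_le_trans; [exact Hhd|apply Rmin_l]).
  assert (Hh2 : Rabs h < r) by (eapply Rlt_le_trans; [exact Hhd|apply Rmin_r]).
  rewrite <- !E. apply Hd; auto.
  - rewrite upd_0; auto.
  - apply Hb. rewrite Rplus_0_l, norm_upd. auto.
Qed.

Lemma continuous_on_ext {n} (U : vec n -> Prop) f g : (forall y, U y -> f y = g y) ->
  continuous_on U f -> continuous_on U g.
Proof.
  intros E H x Hx eps Heps. destruct (H x Hx eps Heps) as [d [Hd H2]].
  exists d; split; auto. intros y Hy Hyd. rewrite <- !E; auto.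
Qed.

Lemma continuous_on_const {n} (U : vec n -> Prop) a : continuous_on U (fun _ => a).
Proof.
  intros x Hx eps Heps. exists 1. split. lra.
  intros. replace (a - a) with 0 by ring. rewrite Rabs_R0; lra.
Qed.

Lemma continuous_on_plus {n} (U : vec n -> Prop) f g :
  continuous_on U f -> continuous_on U g -> continuous_on U (fun x => f x + g x).
Proof.
  intros Hf Hg x Hx eps Heps.
  destruct (Hf x Hx (eps/2)) as [d1 [Hd1 H1]]. lra.
  destruct (Hg x Hx (eps/2)) as [d2 [Hd2 H2]]. lra.
  exists (Rmin d1 d2). split. apply Rmin_glb_lt; auto.
  intros y Hy Hyd. pose proof (Rmin_l d1 d2). pose proof (Rmin_r d1 d2).
  specialize (H1 y Hy ltac:(lra)). specialize (H2 y Hy ltac:(lra)).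
  replace (f y + g y - (f x + g x)) with ((f y - f x) + (g y - g x)) by ring.
  eapply Rle_lt_trans. apply Rabs_triang. lra.
Qed.

Lemma continuous_on_mult {n} (U : vec n -> Prop) f g :
  continuous_on U f -> continuous_on U g -> continuous_on U (fun x => f x * g x).
Proof.
  intros Hf Hg x Hx eps Heps.
  set (a := Rabs (f x)). set (b := Rabs (g x)).
  assert (Ha : 0 <= a) by apply Rabs_pos. assert (Hb : 0 <= b) by apply Rabs_pos.
  destruct (small_factor (a + b + 1) eps ltac:(lra) Heps) as (e & He & He1 & He2).
  destruct (Hf x Hx e He) as [d1 [Hd1 H1]].
  destruct (Hg x Hx e He) as [d2 [Hd2 H2]].
  exists (Rmin d1 d2). split. apply Rmin_glb_lt; auto.
  intros y Hy Hyd. pose proof (Rmin_l d1 d2). pose proof (Rmin_r d1 d2).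
  specialize (H1 y Hy ltac:(lra)). specialize (H2 y Hy ltac:(lra)).
  replace (f y * g y - f x * g x)
    with ((f y - f x) * (g y - g x) + (f y - f x) * g x + f x * (g y - g x)) by ring.
  eapply Rle_lt_trans. apply Rabs_triang.
  eapply Rle_lt_trans. apply Rplus_le_compat_r, Rabs_triang.
  rewrite !Rabs_mult. fold a b.
  assert (Rabs (f y - f x) * Rabs (g y - g x) <= e * e)
    by (apply Rmult_le_compat; try apply Rabs_pos; lra).
  assert (Rabs (f y - f x) * b <= e * b) by (apply Rmult_le_compat_r; lra).
  assert (a * Rabs (g y - g x) <= a * e) by (apply Rmult_le_compat_l; lra).
  nra.
Qed.

Lemma continuous_on_minus {n} (U : vec n -> Prop) f g :
  continuous_on U f -> continuous_on U g -> continuous_on U (fun x => f x - g x).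
Proof.
  intros Hf Hg. apply continuous_on_plus; auto.
  apply (continuous_on_ext U (fun x => (-1) * g x)); [intros; ring|].
  apply continuous_on_mult; auto. apply continuous_on_const.
Qed.

Lemma continuous_on_local_bound {n} (U : vec n -> Prop) g x : continuous_on U g -> U x ->
  exists d, d > 0 /\ forall y, U y -> norm (vsub y x) < d -> Rabs (g y) <= Rabs (g x) + 1.
Proof.
  intros H Hx. destruct (H x Hx 1) as [d [Hd H2]]. lra. exists d; split; auto.
  intros y Hy Hyd. specialize (H2 y Hy Hyd). pose proof (Rabs_triang_inv (g y) (g x)). lra.
Qed.

Lemma Ck_continuous_on {n} (U : vec n -> Prop) k f : Ck k U f -> continuous_on U f.
Proof. destruct k; simpl; tauto. Qed.

Lemma Ck_ext {n} (U : vec n -> Prop) k : is_open U -> forall f g,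
  (forall y, U y -> f y = g y) -> Ck k U f -> Ck k U g.
Proof.
  intros HU. induction k; intros f g E Hf; simpl in *.
  - eapply continuous_on_ext; eauto.
  - destruct Hf as [Hc [D [H1 H2]]]. split. eapply continuous_on_ext; eauto.
    exists D. split; auto. intros i x Hx. eapply has_partial_local; eauto.
Qed.

Lemma Ck_S_Ck {n} (U : vec n -> Prop) k : forall f, Ck (S k) U f -> Ck k U f.
Proof.
  induction k; intros f Hf.
  - apply (Ck_continuous_on U 1); auto.
  - destruct Hf as [Hc [D [H1 H2]]]. split; auto. exists D. split; auto.
Qed.

Lemma Ck_const {n} (U : vec n -> Prop) k a : Ck k U (fun _ => a).
Proof.
  revert a. induction k; intros a; simpl. apply continuous_on_const.
  split. apply continuous_on_const. exists (fun _ _ => 0). split; auto.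
  intros i x Hx. apply derivable_pt_lim_const.
Qed.

Lemma Ck_plus {n} (U : vec n -> Prop) k :
  forall f g, Ck k U f -> Ck k U g -> Ck k U (fun x => f x + g x).
Proof.
  induction k; intros f g Hf Hg; simpl in *.
  - apply continuous_on_plus; auto.
  - destruct Hf as [Hfc [Df [Hf1 Hf2]]]. destruct Hg as [Hgc [Dg [Hg1 Hg2]]].
    split. apply continuous_on_plus; auto.
    exists (fun i x => Df i x + Dg i x). split.
    + intros i x Hx.
      apply (derivable_pt_lim_plus (fun h => f (upd x i h)) (fun h => g (upd x i h)));
        [apply Hf1|apply Hg1]; auto.
    + intros i. apply IHk; auto.
Qed.

Lemma Ck_mult {n} (U : vec n -> Prop) k :
  forall f g, Ck k U f -> Ck k U g -> Ck k U (fun x => f x * g x).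
Proof.
  induction k; intros f g Hf Hg.
  - simpl in *. apply continuous_on_mult; auto.
  - pose proof (Ck_S_Ck U k f Hf) as Hfk. pose proof (Ck_S_Ck U k g Hg) as Hgk.
    destruct Hf as [Hfc [Df [Hf1 Hf2]]]. destruct Hg as [Hgc [Dg [Hg1 Hg2]]].
    split. apply continuous_on_mult; auto.
    exists (fun i x => Df i x * g x + f x * Dg i x). split.
    + intros i x Hx.
      pose proof (derivable_pt_lim_mult (fun h => f (upd x i h)) (fun h => g (upd x i h)) 0
        _ _ (Hf1 i x Hx) (Hg1 i x Hx)) as Hm.
      cbv beta in Hm. rewrite upd_0 in Hm. exact Hm.
    + intros i. apply Ck_plus; apply IHk; auto.
Qed.

Lemma Ck_fsum {n} (U : vec n -> Prop) k m (f : Fin.t m -> vec n -> R) :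
  (forall i, Ck k U (f i)) -> Ck k U (fun x => fsum m (fun i => f i x)).
Proof.
  revert f; induction m; intros f H; simpl. apply Ck_const.
  apply Ck_plus; auto.
Qed.

Lemma Cinf_pderiv {n} (U : vec n -> Prop) f i :
  is_open U -> Cinf U f -> Cinf U (fun x => pderiv f i x).
Proof.
  intros HU Hf k. destruct (Hf (S k)) as [_ [D [H1 H2]]].
  apply (Ck_ext U k HU (D i)); [|apply H2].
  intros y Hy. symmetry. apply pderiv_eq, H1, Hy.
Qed.

Lemma Cinf_lie {n} (U : vec n -> Prop) X g : is_open U -> Cinf_field U X -> Cinf U g ->
  forall k, Cinf U (lie X k g).
Proof.
  intros HU HX Hg k. induction k; simpl; auto.
  intros m. apply (Ck_fsum U m n (fun i x => X x i * grad (lie X k g) x i)).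
  intros j. apply Ck_mult. apply HX. apply (Cinf_pderiv U (lie X k g) j HU IHk).
Qed.

Lemma continuity_pt_eps (f : R -> R) x : continuity_pt f x ->
  forall eps, eps > 0 -> exists d, d > 0 /\ forall y, Rabs (y - x) < d -> Rabs (f y - f x) < eps.
Proof.
  intros H eps Heps. destruct (H eps Heps) as [d [Hd H2]]. exists d. split; auto.
  intros y Hy. destruct (Req_dec y x) as [->|Hne].
  - replace (f x - f x) with 0 by ring. rewrite Rabs_R0; lra.
  - apply (H2 y). split. split. exact I. auto. simpl; unfold Rdist; auto.
Qed.

Lemma continuity_pt_vec {n} (phi : R -> vec n) t :
  (forall j, continuity_pt (fun s => phi s j) t) ->
  forall eps, eps > 0 -> exists d, d > 0 /\
    forall s, Rabs (s - t) < d -> norm (vsub (phi s) (phi t)) < eps.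
Proof.
  intros Hc eps Heps. pose proof (pos_INR n) as Hn.
  set (e := eps / (INR n + 1)).
  assert (He : e > 0) by (apply Rdiv_lt_0_compat; lra).
  destruct (fin_common_radius n (fun j d => forall s, Rabs (s - t) < d -> Rabs (phi s j - phi t j) < e))
    as [d [Hd Hphi]].
  - intros j d d' Hd' H s Hs. apply H. lra.
  - intros j. apply (continuity_pt_eps _ _ (Hc j) e He).
  - exists d. split; auto. intros s Hs.
    eapply Rle_lt_trans. apply (norm_le_coord_bound _ e). intros j. left. apply Hphi; auto.
    unfold e. apply (Rmult_lt_reg_r (INR n + 1)); [lra|].
    field_simplify; nra.
Qed.

Lemma pow_bound_of_deriv_bound_pos (H h : R -> R) K p : H 0 = 0 -> K >= 0 ->
  (forall s, 0 <= s -> derivable_pt_lim H s (h s)) ->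
  (forall s, 0 <= s -> Rabs (h s) <= K * s ^ p / INR (fact p)) ->
  forall t, 0 <= t -> Rabs (H t) <= K * t ^ (S p) / INR (fact (S p)).
Proof.
  intros H0 HK Hd Hb t Ht.
  set (P := fun s => K * s ^ (S p) / INR (fact (S p))).
  assert (HP : forall s, derivable_pt_lim P s (K * s ^ p / INR (fact p))).
  { intros s. unfold P.
    replace (K * s ^ p / INR (fact p)) with (K / INR (fact (S p)) * (INR (S p) * s ^ (pred (S p)))).
    2:{ simpl pred. rewrite fact_simpl, mult_INR. field.
        split. apply INR_fact_neq_0. apply not_0_INR; lia. }
    assert (E : (fun s => K * s ^ S p / INR (fact (S p)))
                = mult_real_fct (K / INR (fact (S p))) (fun s => s ^ S p)).
    { apply functional_extensionality; intros; unfold mult_real_fct; field. apply INR_fact_neq_0. }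
    rewrite E. apply derivable_pt_lim_scal, derivable_pt_lim_pow. }
  destruct (Req_dec t 0) as [->|Htn].
  { rewrite H0, Rabs_R0. unfold P. simpl. rewrite Rmult_0_l, Rmult_0_r. unfold Rdiv. lra. }
  destruct (MVT_cor2 (fun s => P s - H s) (fun s => K * s ^ p / INR (fact p) - h s) 0 t)
    as [c1 [E1 Hc1]]. lra.
  { intros c Hc. apply derivable_pt_lim_minus; auto. apply Hd; lra. }
  destruct (MVT_cor2 (fun s => P s + H s) (fun s => K * s ^ p / INR (fact p) + h s) 0 t)
    as [c2 [E2 Hc2]]. lra.
  { intros c Hc. apply derivable_pt_lim_plus; auto. apply Hd; lra. }
  assert (P 0 = 0) by (unfold P; simpl; unfold Rdiv; ring).
  pose proof (Hb c1 ltac:(lra)). pose proof (Hb c2 ltac:(lra)).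
  pose proof (Rabs_le_between' (h c1) 0 (K * c1 ^ p / INR (fact p))).
  pose proof (Rle_abs (h c1)). pose proof (Rle_abs (- h c1)). rewrite Rabs_Ropp in *.
  pose proof (Rle_abs (h c2)). pose proof (Rle_abs (- h c2)). rewrite Rabs_Ropp in *.
  fold (P t). apply Rabs_le.
  assert (0 <= (K * c1 ^ p / INR (fact p) - h c1) * (t - 0)) by (apply Rmult_le_pos; lra).
  assert (0 <= (K * c2 ^ p / INR (fact p) + h c2) * (t - 0)) by (apply Rmult_le_pos; lra).
  rewrite H0 in *. lra.
Qed.

Lemma pow_bound_of_deriv_bound (H h : R -> R) K p : H 0 = 0 -> K >= 0 ->
  (forall s, derivable_pt_lim H s (h s)) ->
  (forall s, Rabs (h s) <= K * Rabs s ^ p / INR (fact p)) ->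
  forall t, Rabs (H t) <= K * Rabs t ^ (S p) / INR (fact (S p)).
Proof.
  intros H0 HK Hd Hb t. destruct (Rle_dec 0 t).
  - rewrite (Rabs_right t) by lra. apply pow_bound_of_deriv_bound_pos with h; auto.
    intros s Hs. pose proof (Hb s) as Hbs. rewrite (Rabs_right s) in Hbs by lra. exact Hbs.
  - rewrite (Rabs_left t) by lra.
    replace (H t) with (H (- - t)) by (f_equal; ring).
    apply (pow_bound_of_deriv_bound_pos (fun s => H (- s)) (fun s => - h (- s)) K p); auto.
    + simpl. rewrite Ropp_0; auto.
    + intros s Hs. replace (- h (- s)) with (h (- s) * (-1)) by ring.
      apply (derivable_pt_lim_comp Ropp H); [|apply Hd].
      replace (-1) with (- (1)) by ring. apply derivable_pt_lim_opp, derivable_pt_lim_id.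
    + intros s Hs. rewrite Rabs_Ropp.
      pose proof (Hb (- s)) as Hbs. rewrite Rabs_Ropp, (Rabs_right s) in Hbs by lra. exact Hbs.
    + lra.
Qed.

Lemma derivable_pt_lim_RInt_0 (h : R -> R) : (forall t, continuity_pt h t) ->
  forall t, derivable_pt_lim (fun s => RInt h 0 s) t (h t).
Proof.
  intros Hc t. apply is_derive_Reals. apply (is_derive_RInt h (RInt h 0) 0 t).
  - apply filter_forall. intros b. apply (@RInt_correct R_CompleteNormedModule).
    apply (@ex_RInt_continuous R_CompleteNormedModule).
    intros z _. apply continuity_pt_filterlim. auto.
  - apply continuity_pt_filterlim. auto.
Qed.

(* The bound [A T (q T)^m / m!] on the [m]-th Picard increment over [|t| <= T]. *)
Definition picard_majorant A q T m := A * T * (q * T) ^ m / INR (fact m).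

Lemma picard_majorant_nonneg A q T m :
  0 <= A -> 0 <= q -> 0 <= T -> 0 <= picard_majorant A q T m.
Proof.
  intros. unfold picard_majorant. apply Rmult_le_pos. apply Rmult_le_pos. nra.
  apply pow_le; nra. left; apply Rinv_0_lt_compat, INR_fact_lt_0.
Qed.

Lemma picard_majorant_halves A q T : 0 <= A -> 0 <= q -> 0 <= T -> exists N0,
  forall m, (N0 <= m)%nat -> picard_majorant A q T (S m) <= picard_majorant A q T m / 2.
Proof.
  intros HA Hq HT. destruct (INR_archimed 1 (2 * q * T)) as [N0 HN0]; [lra|].
  exists N0. intros m Hm. unfold picard_majorant. rewrite fact_simpl, mult_INR. cbn [pow].
  assert (INR N0 <= INR m) by (apply le_INR; auto).
  rewrite S_INR.
  pose proof (pos_INR m). pose proof (INR_fact_lt_0 m). pose proof (pow_le (q * T) m ltac:(nra)).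
  set (a := A * T * (q * T) ^ m / INR (fact m)).
  assert (0 <= a)
    by (apply Rmult_le_pos; [apply Rmult_le_pos; [nra|auto]|left; apply Rinv_0_lt_compat; auto]).
  replace (A * T * (q * T * (q * T) ^ m) / ((INR m + 1) * INR (fact m)))
    with (a * (q * T / (INR m + 1))) by (unfold a; field; lra).
  assert (q * T / (INR m + 1) <= / 2).
  { apply (Rmult_le_reg_r (INR m + 1)). lra. field_simplify; lra. }
  unfold Rdiv at 2. apply Rmult_le_compat_l; auto.
Qed.

Lemma picard_majorant_cv0 A q T : Un_cv (picard_majorant A q T) 0.
Proof.
  intros eps Heps. destruct (Req_dec (A * T) 0) as [E|E].
  - exists 0%nat. intros m _. unfold picard_majorant, Rdist. rewrite E.
    unfold Rdiv. rewrite !Rmult_0_l, Rminus_0_r, Rabs_R0. lra.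
  - assert (Ha : 0 < Rabs (A * T)) by (apply Rabs_pos_lt; auto).
    destruct (cv_speed_pow_fact (q * T) (eps / Rabs (A * T))) as [N HN].
    { apply Rdiv_lt_0_compat; lra. }
    exists N. intros m Hm. specialize (HN m Hm). unfold Rdist in *. rewrite Rminus_0_r in *.
    unfold picard_majorant.
    replace (A * T * (q * T) ^ m / INR (fact m)) with ((A * T) * ((q * T) ^ m / INR (fact m)))
      by (unfold Rdiv; ring).
    rewrite Rabs_mult. apply (Rmult_lt_compat_l (Rabs (A * T))) in HN; auto.
    replace (Rabs (A * T) * (eps / Rabs (A * T))) with eps in HN by (field; lra). lra.
Qed.

Definition coord_lipschitz {n} (G : vec n -> vec n) (L : R) : Prop :=
  forall i z z', Rabs (G z i - G z' i) <= L * norm (vsub z z').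

Fixpoint picard {n} (G : vec n -> vec n) (x0 : vec n) (m : nat) : R -> vec n :=
  match m with
  | O => fun _ => x0
  | S m' => fun t i => x0 i + RInt (fun s => G (picard G x0 m' s) i) 0 t
  end.

Definition picard_limit {n} (G : vec n -> vec n) (x0 : vec n) (t : R) : vec n :=
  fun i => epsilon (inhabits 0) (fun l => Un_cv (fun m => picard G x0 m t i) l).

Section Picard.

Variables (n : nat) (G : vec n -> vec n) (L : R) (x0 : vec n).
Hypothesis HG : coord_lipschitz G L.
Hypothesis HL : L >= 0.

Let A := INR n * norm (G x0).
Let q := INR n * L.

Lemma picard_constants_nonneg : 0 <= A /\ 0 <= q.
Proof.
  pose proof (pos_INR n). pose proof (norm_nonneg (G x0)).
  unfold A, q. split; apply Rmult_le_pos; lra.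
Qed.

Lemma continuity_pt_field_comp (phi : R -> vec n) i t :
  (forall j, continuity_pt (fun s => phi s j) t) -> continuity_pt (fun s => G (phi s) i) t.
Proof.
  intros Hc eps Heps.
  destruct (continuity_pt_vec phi t Hc (eps / (L + 1))) as [d [Hd Hdd]].
  { apply Rdiv_lt_0_compat; lra. }
  exists d. split; auto. intros y [_ Hy]. simpl in *. unfold Rdist in *.
  eapply Rle_lt_trans. apply HG.
  specialize (Hdd y Hy). pose proof (norm_nonneg (vsub (phi y) (phi t))).
  apply (Rmult_lt_compat_r (L + 1)) in Hdd; [|lra].
  replace (eps / (L + 1) * (L + 1)) with eps in Hdd by (field; lra). nra.
Qed.

Lemma picard_deriv m :
  (forall j t, continuity_pt (fun s => picard G x0 m s j) t) ->
  forall i t, derivable_pt_lim (fun s => picard G x0 (S m) s i) t (G (picard G x0 m t) i).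
Proof.
  intros Hc i t. simpl.
  replace (G (picard G x0 m t) i) with (0 + G (picard G x0 m t) i) by ring.
  apply derivable_pt_lim_plus. apply derivable_pt_lim_const.
  apply (derivable_pt_lim_RInt_0 (fun s => G (picard G x0 m s) i)).
  intros t'. apply continuity_pt_field_comp; auto.
Qed.

Lemma picard_continuous m j t : continuity_pt (fun s => picard G x0 m s j) t.
Proof.
  revert j t. induction m; intros j t.
  - apply continuity_pt_const. intros a b; reflexivity.
  - apply (derivable_continuous_pt _ _ (exist _ _ (picard_deriv m IHm j t))).
Qed.

Lemma picard_at_0 m : picard G x0 m 0 = x0.
Proof.
  destruct m; simpl; auto. apply functional_extensionality; intros i.
  rewrite RInt_point. unfold zero; simpl. ring.
Qed.

Lemma picard_increment_bound m t :
  norm (vsub (picard G x0 (S m) t) (picard G x0 m t))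
    <= A * q ^ m * Rabs t ^ (S m) / INR (fact (S m)).
Proof.
  destruct picard_constants_nonneg as [HA Hq].
  revert t. induction m; intros t.
  - replace (A * q ^ 0 * Rabs t ^ 1 / INR (fact 1))
      with (INR n * (norm (G x0) * Rabs t ^ 1 / INR (fact 1))) by (unfold A; simpl; field).
    apply norm_le_coord_bound. intros i. unfold vsub.
    apply (pow_bound_of_deriv_bound (fun t => picard G x0 1 t i - picard G x0 0 t i)
      (fun _ => G x0 i) (norm (G x0)) 0).
    + rewrite !picard_at_0. ring.
    + pose proof (norm_nonneg (G x0)). lra.
    + intros s. replace (G x0 i) with (G (picard G x0 0 s) i - 0) by (simpl; ring).
      apply derivable_pt_lim_minus. apply picard_deriv, picard_continuous.
      apply derivable_pt_lim_const.
    + intros s. simpl. replace (norm (G x0) * 1 / 1) with (norm (G x0)) by field.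
      apply Rabs_coord_le_norm.
  - set (K := L * (A * q ^ m)).
    assert (HK : K >= 0)
      by (apply Rle_ge, Rmult_le_pos; [lra|apply Rmult_le_pos; [auto|apply pow_le; auto]]).
    replace (A * q ^ S m * Rabs t ^ S (S m) / INR (fact (S (S m))))
      with (INR n * (K * Rabs t ^ S (S m) / INR (fact (S (S m)))))
      by (unfold K, q; cbn [pow]; field; apply INR_fact_neq_0).
    apply norm_le_coord_bound. intros i. unfold vsub.
    apply (pow_bound_of_deriv_bound (fun t => picard G x0 (S (S m)) t i - picard G x0 (S m) t i)
      (fun s => G (picard G x0 (S m) s) i - G (picard G x0 m s) i) K (S m)).
    + rewrite !picard_at_0. ring.
    + auto.
    + intros s. apply derivable_pt_lim_minus; apply picard_deriv, picard_continuous.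
    + intros s. eapply Rle_trans. apply HG. specialize (IHm s).
      replace (K * Rabs s ^ S m / INR (fact (S m)))
        with (L * (A * q ^ m * Rabs s ^ S m / INR (fact (S m))))
        by (unfold K; field; apply INR_fact_neq_0).
      apply Rmult_le_compat_l; lra.
Qed.

Lemma picard_step_coord m T t i : Rabs t <= T ->
  Rabs (picard G x0 (S m) t i - picard G x0 m t i) <= picard_majorant A q T m.
Proof.
  intros Ht. destruct picard_constants_nonneg as [HA Hq].
  eapply Rle_trans. apply (Rabs_coord_le_norm (vsub (picard G x0 (S m) t) (picard G x0 m t)) i).
  eapply Rle_trans. apply picard_increment_bound.
  unfold picard_majorant. rewrite fact_simpl, mult_INR.
  pose proof (INR_fact_lt_0 m). assert (1 <= INR (S m)) by (apply (le_INR 1); lia).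
  assert (HA' : 0 <= A * q ^ m) by (apply Rmult_le_pos; [auto|apply pow_le; auto]).
  assert (Rabs t ^ S m <= T ^ S m) by (apply pow_incr; split; auto; apply Rabs_pos).
  assert (0 <= Rabs t ^ S m) by (apply pow_le, Rabs_pos).
  replace (A * T * (q * T) ^ m / INR (fact m)) with (A * q ^ m * T ^ S m / INR (fact m))
    by (rewrite (Rpow_mult_distr q T); cbn [pow]; unfold Rdiv; ring).
  unfold Rdiv. rewrite Rinv_mult.
  assert (/ INR (S m) <= 1) by (rewrite <- Rinv_1; apply Rinv_le_contravar; lra).
  assert (0 < / INR (S m)) by (apply Rinv_0_lt_compat; lra).
  assert (0 < / INR (fact m)) by (apply Rinv_0_lt_compat; lra).
  assert (A * q ^ m * Rabs t ^ S m <= A * q ^ m * T ^ S m) by (apply Rmult_le_compat_l; auto).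
  assert (0 <= A * q ^ m * Rabs t ^ S m) by (apply Rmult_le_pos; auto).
  assert (/ INR (S m) * / INR (fact m) <= / INR (fact m)) by nra.
  apply Rmult_le_compat; nra.
Qed.

Lemma picard_tail_coord T N0 t i :
  0 <= T -> (forall m, (N0 <= m)%nat ->
    picard_majorant A q T (S m) <= picard_majorant A q T m / 2) ->
  Rabs t <= T -> forall k m, (N0 <= m)%nat ->
  Rabs (picard G x0 (m + k) t i - picard G x0 m t i) <= 2 * picard_majorant A q T m.
Proof.
  intros HT HN Ht k. destruct picard_constants_nonneg as [HA Hq].
  induction k; intros m Hm.
  - rewrite Nat.add_0_r. replace (picard G x0 m t i - picard G x0 m t i) with 0 by ring.
    rewrite Rabs_R0. pose proof (picard_majorant_nonneg A q T m HA Hq HT). lra.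
  - replace (m + S k)%nat with (S m + k)%nat by lia.
    specialize (IHk (S m) ltac:(lia)). pose proof (picard_step_coord m T t i Ht).
    pose proof (HN m Hm).
    replace (picard G x0 (S m + k) t i - picard G x0 m t i) with
      ((picard G x0 (S m + k) t i - picard G x0 (S m) t i)
       + (picard G x0 (S m) t i - picard G x0 m t i)) by ring.
    eapply Rle_trans. apply Rabs_triang. lra.
Qed.

Lemma picard_limit_cv t i : Un_cv (fun m => picard G x0 m t i) (picard_limit G x0 t i).
Proof.
  unfold picard_limit. apply epsilon_spec.
  destruct picard_constants_nonneg as [HA Hq].
  set (T := Rabs t). assert (HT : 0 <= T) by apply Rabs_pos.
  destruct (picard_majorant_halves A q T HA Hq HT) as [N0 HN0].
  assert (Hc : Cauchy_crit (fun m => picard G x0 m t i)).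
  { intros eps Heps. destruct (picard_majorant_cv0 A q T (eps / 4)) as [N1 HN1]. lra.
    exists (max N0 N1). intros a b Ha Hb. set (N := max N0 N1).
    assert (Hb1 : picard_majorant A q T N < eps / 4).
    { specialize (HN1 N ltac:(lia)). unfold Rdist in HN1. rewrite Rminus_0_r in HN1.
      eapply Rle_lt_trans; [apply Rle_abs|exact HN1]. }
    pose proof (picard_tail_coord T N0 t i HT HN0 (Rle_refl _) (a - N) N ltac:(lia)).
    pose proof (picard_tail_coord T N0 t i HT HN0 (Rle_refl _) (b - N) N ltac:(lia)).
    replace (N + (a - N))%nat with a in H by lia. replace (N + (b - N))%nat with b in H0 by lia.
    unfold Rdist.
    replace (picard G x0 a t i - picard G x0 b t i) with
      ((picard G x0 a t i - picard G x0 N t i) - (picard G x0 b t i - picard G x0 N t i)) by ring.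
    eapply Rle_lt_trans. apply Rabs_triang. rewrite Rabs_Ropp. lra. }
  destruct (Rcomplete.R_complete _ Hc) as [l Hl]. eauto.
Qed.

Lemma picard_limit_unif T N0 t i m :
  0 <= T -> (forall m, (N0 <= m)%nat ->
    picard_majorant A q T (S m) <= picard_majorant A q T m / 2) ->
  Rabs t <= T -> (N0 <= m)%nat ->
  Rabs (picard_limit G x0 t i - picard G x0 m t i) <= 2 * picard_majorant A q T m.
Proof.
  intros HT HN Ht Hm. apply Rnot_lt_le. intros Hlt.
  set (e := Rabs (picard_limit G x0 t i - picard G x0 m t i) - 2 * picard_majorant A q T m).
  destruct (picard_limit_cv t i e ltac:(unfold e; lra)) as [K HK].
  specialize (HK (max K m) ltac:(lia)). unfold Rdist in HK.
  pose proof (picard_tail_coord T N0 t i HT HN Ht (max K m - m) m Hm) as Htail.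
  replace (m + (max K m - m))%nat with (max K m) in Htail by lia.
  assert (Rabs (picard_limit G x0 t i - picard G x0 m t i)
          <= Rabs (picard G x0 (max K m) t i - picard_limit G x0 t i)
             + Rabs (picard G x0 (max K m) t i - picard G x0 m t i)).
  { replace (picard_limit G x0 t i - picard G x0 m t i) with
      (- (picard G x0 (max K m) t i - picard_limit G x0 t i)
       + (picard G x0 (max K m) t i - picard G x0 m t i)) by ring.
    eapply Rle_trans. apply Rabs_triang. rewrite Rabs_Ropp. lra. }
  unfold e in HK. lra.
Qed.

Lemma picard_limit_at_0 : picard_limit G x0 0 = x0.
Proof.
  apply functional_extensionality; intros i.
  apply (UL_sequence (fun m => picard G x0 m 0 i)). apply picard_limit_cv.
  intros eps Heps. exists 0%nat. intros m _. rewrite picard_at_0. unfold Rdist.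
  replace (x0 i - x0 i) with 0 by ring. rewrite Rabs_R0. lra.
Qed.

Lemma picard_field_CVU i T (HT : 0 < T) :
  CVU (fun k y => G (picard G x0 k y) i) (fun y => G (picard_limit G x0 y) i) 0 (mkposreal T HT).
Proof.
  destruct picard_constants_nonneg as [HA Hq].
  destruct (picard_majorant_halves A q T HA Hq ltac:(lra)) as [N0 HN0].
  intros eps Heps. set (M := 2 * L * INR n).
  assert (HM : 0 <= M) by (unfold M; pose proof (pos_INR n); nra).
  destruct (picard_majorant_cv0 A q T (eps / (M + 1))) as [N1 HN1].
  { apply Rdiv_lt_0_compat; lra. }
  exists (max N0 N1). intros k y Hk Hy. unfold Boule in Hy; simpl in Hy. rewrite Rminus_0_r in Hy.
  specialize (HN1 k ltac:(lia)). unfold Rdist in HN1. rewrite Rminus_0_r in HN1.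
  assert (Hbk : 0 <= picard_majorant A q T k) by (apply picard_majorant_nonneg; lra).
  rewrite Rabs_right in HN1 by lra.
  eapply Rle_lt_trans. apply HG.
  assert (norm (vsub (picard_limit G x0 y) (picard G x0 k y))
          <= INR n * (2 * picard_majorant A q T k)).
  { apply norm_le_coord_bound. intros j. unfold vsub.
    apply (picard_limit_unif T N0); auto; try lra; lia. }
  assert (M * picard_majorant A q T k < eps).
  { apply (Rmult_lt_compat_l (M + 1)) in HN1; [|lra].
    replace ((M + 1) * (eps / (M + 1))) with eps in HN1 by (field; lra). nra. }
  unfold M in *. pose proof (pos_INR n). nra.
Qed.

(* The derivatives of the iterates converge uniformly on [|t| < T], so the limit is differentiable. *)
Lemma picard_limit_deriv t i :
  derivable_pt_lim (fun s => picard_limit G x0 s i) t (G (picard_limit G x0 t) i).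
Proof.
  set (T := Rabs t + 1).
  assert (HT : 0 < T) by (unfold T; pose proof (Rabs_pos t); lra).
  pose proof (picard_field_CVU i T HT) as HCVU.
  apply (derivable_pt_lim_CVU (fun k y => picard G x0 (S k) y i)
     (fun k y => G (picard G x0 k y) i) (fun y => picard_limit G x0 y i)
     (fun y => G (picard_limit G x0 y) i) t 0 (mkposreal T HT)).
  - unfold Boule. simpl. rewrite Rminus_0_r. unfold T; lra.
  - intros y k _. apply (picard_deriv k (picard_continuous k)).
  - intros y _ eps Heps. destruct (picard_limit_cv y i eps Heps) as [N HN].
    exists N. intros k Hk. apply HN. lia.
  - exact HCVU.
  - apply CVU_continuity with (fun k y => G (picard G x0 k y) i); auto.
    intros k y _. apply continuity_pt_field_comp. intros j. apply picard_continuous.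
Qed.

End Picard.

Lemma lipschitz_global_solution {n} (G : vec n -> vec n) L x0 :
  coord_lipschitz G L -> L >= 0 -> exists phi : R -> vec n, phi 0 = x0 /\
    forall t i, derivable_pt_lim (fun s => phi s i) t (G (phi t) i).
Proof.
  intros HG HL. exists (picard_limit G x0). split.
  - apply (picard_limit_at_0 n G L); auto.
  - apply (picard_limit_deriv n G L); auto.
Qed.

(* McShane extension [z |-> inf_{y in K} (f y + L |z - y|)], written as [- sup (- ...)]. *)
Definition mcshane {n} (K : vec n -> Prop) (f : vec n -> R) (L : R) (z : vec n) : R :=
  - epsilon (inhabits 0)
      (is_lub (fun r => exists y, K y /\ r = - (f y + L * norm (vsub z y)))).

Section McShane.

Variables (n : nat) (K : vec n -> Prop) (f : vec n -> R) (L B : R) (y0 : vec n).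
Hypothesis Hy0 : K y0.
Hypothesis HL : L >= 0.
Hypothesis HB : forall y, K y -> - B <= f y.

Lemma mcshane_lub z :
  is_lub (fun r => exists y, K y /\ r = - (f y + L * norm (vsub z y))) (- mcshane K f L z).
Proof.
  unfold mcshane. rewrite Ropp_involutive. apply epsilon_spec.
  destruct (completeness (fun r => exists y, K y /\ r = - (f y + L * norm (vsub z y))))
    as [m Hm]; [| |eauto].
  - exists B. intros r [y [Hy ->]]. pose proof (HB y Hy). pose proof (norm_nonneg (vsub z y)). nra.
  - exists (- (f y0 + L * norm (vsub z y0))). eauto.
Qed.

Lemma mcshane_le z y : K y -> mcshane K f L z <= f y + L * norm (vsub z y).
Proof.
  intros Hy. destruct (mcshane_lub z) as [H1 _].
  assert (- (f y + L * norm (vsub z y)) <= - mcshane K f L z) by (apply H1; eauto). lra.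
Qed.

Lemma mcshane_ge z m :
  (forall y, K y -> m <= f y + L * norm (vsub z y)) -> m <= mcshane K f L z.
Proof.
  intros H. destruct (mcshane_lub z) as [_ H2].
  assert (- mcshane K f L z <= - m).
  { apply H2. intros r [y [Hy ->]]. specialize (H y Hy). lra. }
  lra.
Qed.

Lemma mcshane_eq z : (forall y z, K y -> K z -> Rabs (f z - f y) <= L * norm (vsub z y)) ->
  K z -> mcshane K f L z = f z.
Proof.
  intros Hl Hz. apply Rle_antisym.
  - eapply Rle_trans. apply (mcshane_le z z Hz). rewrite norm_vsub_diag. lra.
  - apply mcshane_ge. intros y Hy. specialize (Hl y z Hy Hz).
    pose proof (Rle_abs (f z - f y)). lra.
Qed.

Lemma mcshane_lipschitz z z' :
  Rabs (mcshane K f L z - mcshane K f L z') <= L * norm (vsub z z').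
Proof.
  assert (H : forall a b, mcshane K f L a - L * norm (vsub a b) <= mcshane K f L b).
  { intros a b. apply mcshane_ge. intros y Hy.
    pose proof (mcshane_le a y Hy). pose proof (norm_triang a b y). nra. }
  pose proof (H z z'). pose proof (H z' z). rewrite norm_vsub_sym in H1. apply Rabs_le. lra.
Qed.

End McShane.

Lemma derivable_pt_lim_fsum n (g : Fin.t n -> R -> R) g' t :
  (forall i, derivable_pt_lim (g i) t (g' i)) ->
  derivable_pt_lim (fun s => fsum n (fun i => g i s)) t (fsum n g').
Proof.
  revert g g'; induction n; intros g g' H; simpl.
  - apply derivable_pt_lim_const.
  - apply derivable_pt_lim_plus. apply H. apply (IHn (fun i => g (Fin.FS i))). intros; apply H.
Qed.

Lemma derivable_pt_lim_locally_const (f : R -> R) t d : d > 0 ->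
  (forall s, Rabs (s - t) < d -> f s = f t) -> derivable_pt_lim f t 0.
Proof.
  intros Hd H eps Heps. exists (mkposreal d Hd). simpl. intros h Hh Hhd.
  rewrite H. replace (f t - f t) with 0 by ring. unfold Rdiv.
  rewrite Rmult_0_l, Rminus_0_r, Rabs_R0. lra.
  replace (t + h - t) with h by ring. auto.
Qed.

Lemma gronwall (u u' : R -> R) k t :
  (forall s, 0 <= s -> derivable_pt_lim u s (u' s)) ->
  (forall s, 0 <= s -> u' s <= k * u s) -> 0 <= t -> u t <= u 0 * exp (k * t).
Proof.
  intros Hu Hle Ht.
  set (w := fun s => u s * exp (- k * s)).
  assert (Hw : forall s, 0 <= s -> derivable_pt_lim w s ((u' s - k * u s) * exp (- k * s))).
  { intros s Hs. unfold w. replace ((u' s - k * u s) * exp (- k * s)) with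
      (u' s * exp (- k * s) + u s * (exp (- k * s) * (- k))) by ring.
    apply (derivable_pt_lim_mult u (fun s => exp (- k * s))); auto.
    apply (derivable_pt_lim_comp (fun s => - k * s) exp); [|apply derivable_pt_lim_exp].
    pose proof (derivable_pt_lim_scal id (-k) s 1 (derivable_pt_lim_id s)) as Hl.
    unfold mult_real_fct, id in Hl. rewrite Rmult_1_r in Hl. exact Hl. }
  assert (Hwt : w t <= w 0).
  { destruct (Req_dec t 0) as [->|Hne]. lra.
    destruct (MVT_cor2 w (fun s => (u' s - k * u s) * exp (- k * s)) 0 t) as [s [E Hs]]. lra.
    { intros s Hs. apply Hw; lra. }
    pose proof (Hle s ltac:(lra)). pose proof (exp_pos (- k * s)).
    assert ((u' s - k * u s) * exp (- k * s) <= 0) by nra.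
    assert ((u' s - k * u s) * exp (- k * s) * (t - 0) <= 0) by nra. lra. }
  unfold w in Hwt. rewrite Rmult_0_r, exp_0, Rmult_1_r in Hwt.
  assert (E : exp (- k * t) * exp (k * t) = 1)
    by (rewrite <- exp_plus; replace (- k * t + k * t) with 0 by ring; apply exp_0).
  pose proof (exp_pos (k * t)).
  apply (Rmult_le_compat_r (exp (k * t))) in Hwt; [|lra].
  rewrite Rmult_assoc, E, Rmult_1_r in Hwt. exact Hwt.
Qed.

Lemma real_induction (P : R -> Prop) :
  P 0 ->
  (forall t, 0 < t -> (forall s, 0 <= s < t -> P s) -> P t) ->
  (forall t, 0 <= t -> (forall s, 0 <= s <= t -> P s) ->
     exists d, d > 0 /\ forall s, t < s < t + d -> P s) ->
  forall t, 0 <= t -> P t.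
Proof.
  intros H0 Hclosed Hopen.
  apply NNPP. intros Hn. apply not_all_ex_not in Hn as [tb Htb].
  apply imply_to_and in Htb as [Htb0 Htb].
  set (Good := fun t => 0 <= t /\ forall s, 0 <= s <= t -> P s).
  assert (HG0 : Good 0) by (split; [lra|intros s Hs; replace s with 0 by lra; auto]).
  assert (Hbnd : bound Good).
  { exists tb. intros t [Ht0 Ht]. apply Rnot_lt_le. intros Hlt. apply Htb, Ht. lra. }
  destruct (completeness Good Hbnd) as [ts [Hub Hlub]]; [eauto|].
  assert (Hts0 : 0 <= ts) by (apply Hub, HG0).
  assert (Hbelow : forall s, 0 <= s < ts -> P s).
  { intros s Hs. apply NNPP. intros Hn.
    assert (is_upper_bound Good s).
    { intros t [Ht0 Ht]. apply Rnot_lt_le. intros Hlt. apply Hn, Ht. lra. }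
    specialize (Hlub s H). lra. }
  assert (Hupto : forall s, 0 <= s <= ts -> P s).
  { intros s Hs. destruct (Req_dec s ts) as [->|]; [|apply Hbelow; lra].
    destruct (Req_dec ts 0) as [->|]; auto. apply Hclosed; auto. lra. }
  destruct (Hopen ts Hts0 Hupto) as [d [Hd Hext]].
  assert (Good (ts + d / 2)).
  { split; [lra|]. intros s Hs. destruct (Rle_dec s ts); [apply Hupto; lra|apply Hext; lra]. }
  specialize (Hub _ H). lra.
Qed.

Lemma C1_local_lipschitz {n} (U : vec n -> Prop) (f : vec n -> R) (D : Fin.t n -> vec n -> R) x :
  is_open U -> (forall j z, U z -> has_partial f j z (D j z)) ->
  (forall j, continuous_on U (D j)) -> U x ->
  exists d, d > 0 /\ forall y z, norm (vsub y x) < d -> norm (vsub z x) < d ->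
    Rabs (f z - f y) <= (1 / d) * norm (vsub z y).
Proof.
  intros HU Hp Hc Hx. destruct (HU x Hx) as [r0 [Hr0 Hb0]].
  destruct (fin_common_radius n (fun j d => forall y, U y -> norm (vsub y x) < d ->
      Rabs (D j y) <= Rabs (D j x) + 1)) as [dj [Hdj Hj]].
  { intros j d d' Hd' Hj y Hy Hyd. apply Hj; auto. lra. }
  { intros j. apply (continuous_on_local_bound U (D j) x (Hc j) Hx). }
  set (M := fsum n (fun j => Rabs (D j x) + 1)).
  assert (HM : forall j, Rabs (D j x) + 1 <= M).
  { intros j. apply (fsum_ge_term n (fun j => Rabs (D j x) + 1)).
    intros k; pose proof (Rabs_pos (D k x)); lra. }
  assert (HnM : 0 <= INR n * M).
  { apply Rmult_le_pos; [apply pos_INR|].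
    apply fsum_nonneg; intros j; pose proof (Rabs_pos (D j x)); lra. }
  set (rho := Rmin r0 dj).
  assert (Hrho : rho > 0) by (apply Rmin_glb_lt; auto).
  set (m := Rmin (rho / 3) (1 / (INR n * M + 1))).
  assert (Hm0 : 0 < m) by (apply Rmin_glb_lt; [lra|apply Rdiv_lt_0_compat; lra]).
  assert (Hm1 : m <= rho / 3) by apply Rmin_l.
  assert (Hinv : INR n * M <= 1 / m).
  { assert (m <= 1 / (INR n * M + 1)) by apply Rmin_r.
    apply (Rmult_le_reg_r m); auto. replace (1 / m * m) with 1 by (field; lra).
    apply (Rmult_le_compat_l (INR n * M)) in H; auto.
    replace (INR n * M * (1 / (INR n * M + 1))) with (1 - 1 / (INR n * M + 1)) in H
      by (field; lra).
    assert (0 < 1 / (INR n * M + 1)) by (apply Rdiv_lt_0_compat; lra). lra. }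
  exists m. split; auto. intros y z Hy Hz.
  eapply Rle_trans.
  - apply (lipschitz_of_partials_bound U f D y z (2 * rho / 3) M); auto.
    + intros w Hw. assert (Hwx : norm (vsub w x) < rho) by (pose proof (norm_triang w y x); lra).
      assert (rho <= r0) by apply Rmin_l. assert (rho <= dj) by apply Rmin_r.
      assert (Uw : U w) by (apply Hb0; lra).
      split; auto. intros j. eapply Rle_trans; [apply Hj; auto; lra|apply HM].
    + pose proof (norm_triang z x y) as T. rewrite (norm_vsub_sym x y) in T. lra.
  - apply Rmult_le_compat_r; auto. apply norm_nonneg.
Qed.

Lemma Ck_field1_local_lipschitz {n} (U : vec n -> Prop) (F : vec n -> vec n) :
  is_open U -> Ck_field 1 U F -> forall x, U x ->
  exists d, d > 0 /\ forall y z, norm (vsub y x) < d -> norm (vsub z x) < d ->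
    norm (vsub (F z) (F y)) <= INR n * (1 / d) * norm (vsub z y).
Proof.
  intros HU HF x Hx.
  destruct (fin_common_radius n (fun i d => forall y z, norm (vsub y x) < d -> norm (vsub z x) < d ->
      Rabs (F z i - F y i) <= (1 / d) * norm (vsub z y))) as [d [Hd Hall]].
  - intros i d d' Hd' Hi y z Hy Hz. eapply Rle_trans. apply Hi; lra.
    apply Rmult_le_compat_r. apply norm_nonneg. unfold Rdiv. rewrite !Rmult_1_l.
    apply Rinv_le_contravar; lra.
  - intros i. destruct (HF i) as [_ [DF [HDF1 HDF2]]].
    apply (C1_local_lipschitz U (fun x => F x i) DF x); auto.
  - exists d. split; auto. intros y z Hy Hz.
    replace (INR n * (1 / d) * norm (vsub z y)) with (INR n * ((1 / d) * norm (vsub z y))) by ring.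
    apply norm_le_coord_bound. intros i. unfold vsub at 1. apply Hall; auto.
Qed.

Lemma continuous_field_bounded_on_compact {n} (U K : vec n -> Prop) (F : vec n -> vec n) :
  is_open U -> is_compact K -> (forall x, K x -> U x) ->
  (forall i, continuous_on U (fun x => F x i)) ->
  exists B, B >= 0 /\ forall x, K x -> norm (F x) <= B.
Proof.
  intros HU HK HKU HF.
  destruct (compact_uniform_nbhd K (fun m y => norm (F y) <= 1 / m) HK) as (d & m & Hd & Hm & HL).
  - intros m m' y Hm' Hy. eapply Rle_trans; [exact Hy|]. unfold Rdiv; rewrite !Rmult_1_l.
    apply Rinv_le_contravar; lra.
  - intros x Kx. pose proof (HKU x Kx) as Hx. destruct (HU x Hx) as [r0 [Hr0 Hb0]].
    destruct (fin_common_radius n (fun i d => forall y, U y -> norm (vsub y x) < d ->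
        Rabs (F y i) <= Rabs (F x i) + 1)) as [d [Hd Hall]].
    + intros i d d' Hd' Hi y Hy Hyd. apply Hi; auto. lra.
    + intros i. apply (continuous_on_local_bound U (fun y => F y i) x (HF i) Hx).
    + set (M := fsum n (fun i => Rabs (F x i) + 1)).
      assert (HM0 : 0 <= M)
        by (apply fsum_nonneg; intros i; pose proof (Rabs_pos (F x i)); lra).
      exists (Rmin r0 d), (1 / (M + 1)). split. apply Rmin_glb_lt; auto.
      split. apply Rdiv_lt_0_compat; lra.
      intros y Hy. replace (1 / (1 / (M + 1))) with (M + 1) by (field; lra).
      pose proof (Rmin_l r0 d). pose proof (Rmin_r r0 d).
      assert (Uy : U y) by (apply Hb0; lra).
      eapply Rle_trans. apply norm_le_sum_abs.
      assert (fsum n (fun i => Rabs (F y i)) <= M) by (apply fsum_le; intros i; apply Hall; auto; lra).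
      lra.
  - exists (1 / m). split. left; apply Rdiv_lt_0_compat; lra.
    intros x Hx. apply (HL x x Hx). rewrite norm_vsub_diag; lra.
Qed.

Lemma lipschitz_of_local_and_bound {n} (K : vec n -> Prop) (F : vec n -> vec n) m B :
  m > 0 -> B >= 0 -> (forall y, K y -> norm (F y) <= B) ->
  (forall y z, K y -> norm (vsub z y) < m ->
     norm (vsub (F z) (F y)) <= (1 / m) * norm (vsub z y)) ->
  forall y z, K y -> K z -> norm (vsub (F z) (F y)) <= (1 / m + 2 * B / m) * norm (vsub z y).
Proof.
  intros Hm HB0 HB HL y z Hy Hz.
  assert (Hm' : 0 < 1 / m) by (apply Rdiv_lt_0_compat; lra).
  assert (HBm : 0 <= 2 * B / m)
    by (unfold Rdiv; apply Rmult_le_pos; [lra|left; apply Rinv_0_lt_compat; lra]).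
  pose proof (norm_nonneg (vsub z y)).
  destruct (Rlt_le_dec (norm (vsub z y)) m).
  - eapply Rle_trans; [apply HL; auto|]. apply Rmult_le_compat_r; lra.
  - eapply Rle_trans. apply norm_vsub_le. pose proof (HB y Hy). pose proof (HB z Hz).
    assert (2 * B <= 2 * B / m * norm (vsub z y)).
    { replace (2 * B / m * norm (vsub z y)) with (2 * B * (norm (vsub z y) / m)) by (field; lra).
      assert (1 <= norm (vsub z y) / m).
      { apply (Rmult_le_reg_r m). lra. field_simplify; lra. }
      nra. }
    assert (0 <= 1 / m * norm (vsub z y)) by (apply Rmult_le_pos; lra).
    lra.
Qed.

Lemma Ck_field1_lipschitz_on_compact {n} (U K : vec n -> Prop) (F : vec n -> vec n) :
  is_open U -> is_compact K -> (forall x, K x -> U x) -> Ck_field 1 U F ->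
  exists L, L >= 0 /\ forall y z, K y -> K z ->
    norm (vsub (F z) (F y)) <= L * norm (vsub z y).
Proof.
  intros HU HK HKU HF.
  destruct (continuous_field_bounded_on_compact U K F HU HK HKU) as [B [HB0 HB]].
  { intros i. apply (Ck_continuous_on U 1), HF. }
  destruct (compact_uniform_nbhd K (fun m y => forall z, norm (vsub z y) < m ->
      norm (vsub (F z) (F y)) <= (1 / m) * norm (vsub z y)) HK) as (d & m & Hd & Hm & HL).
  - intros m m' y Hm' Hy z Hz. eapply Rle_trans. apply Hy. lra.
    apply Rmult_le_compat_r. apply norm_nonneg.
    unfold Rdiv; rewrite !Rmult_1_l. apply Rinv_le_contravar; lra.
  - intros x Kx. destruct (Ck_field1_local_lipschitz U F HU HF x (HKU x Kx)) as [r [Hr Hl]].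
    set (L := INR n * (1 / r)).
    assert (HL0 : 0 <= L)
      by (apply Rmult_le_pos; [apply pos_INR|left; apply Rdiv_lt_0_compat; lra]).
    set (m := Rmin (r / 2) (1 / (L + 1))).
    assert (Hm0 : 0 < m) by (apply Rmin_glb_lt; [lra|apply Rdiv_lt_0_compat; lra]).
    assert (Hm1 : m <= r / 2) by apply Rmin_l. assert (Hm2 : m <= 1 / (L + 1)) by apply Rmin_r.
    exists (r / 2), m. split. lra. split. auto.
    intros y Hy z Hz.
    eapply Rle_trans. apply Hl. lra. pose proof (norm_triang z y x). lra.
    apply Rmult_le_compat_r. apply norm_nonneg.
    assert (L * m <= 1).
    { apply (Rmult_le_compat_l L) in Hm2; auto.
      replace (L * (1 / (L + 1))) with (1 - 1 / (L + 1)) in Hm2 by (field; lra).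
      assert (0 < 1 / (L + 1)) by (apply Rdiv_lt_0_compat; lra). lra. }
    apply (Rmult_le_reg_r m); auto. replace (1 / m * m) with 1 by (field; lra). fold L. lra.
  - exists (1 / m + 2 * B / m). split.
    + assert (0 < 1 / m) by (apply Rdiv_lt_0_compat; lra).
      assert (0 <= 2 * B / m)
        by (unfold Rdiv; apply Rmult_le_pos; [lra|left; apply Rinv_0_lt_compat; lra]).
      lra.
    + apply lipschitz_of_local_and_bound; auto.
      intros y z Hy Hz. apply (HL y y Hy); auto. rewrite norm_vsub_diag; lra.
Qed.

Lemma solution_shift {n} U F x0 (y : R -> vec n) a : is_solution U F x0 y -> 0 <= a ->
  is_solution U F (y a) (fun s => y (a + s)).
Proof.
  intros [E Hs] Ha. split. rewrite Rplus_0_r; auto.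
  intros t Ht. destruct (Hs (a + t) ltac:(lra)) as [Hu Hd]. split; auto.
  intros i eps Heps. destruct (Hd i eps Heps) as [d Hdd]. exists d. intros h Hh Hhd.
  specialize (Hdd h Hh Hhd). rewrite Rplus_assoc in Hdd. exact Hdd.
Qed.

Record gradient_system {n} (U : vec n -> Prop) (X : vec n -> vec n) (V : vec n -> R)
    (c : R) : Prop := {
  gs_open : is_open U;
  gs_X : Ck_field 1 U X;
  gs_V : Ck 2 U V;
  gs_V_nonneg : forall x, U x -> 0 <= V x;
  gs_orth : forall x, U x -> dot (grad V x) (X x) = 0;
  gs_c_pos : c > 0;
  gs_compact : is_compact (fun x => U x /\ 0 <= V x <= c)
}.

Arguments gs_open {n U X V c}.
Arguments gs_X {n U X V c}.
Arguments gs_V {n U X V c}.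
Arguments gs_V_nonneg {n U X V c}.
Arguments gs_orth {n U X V c}.
Arguments gs_c_pos {n U X V c}.
Arguments gs_compact {n U X V c}.

Definition flow_field {n} (X : vec n -> vec n) (V : vec n -> R) (x : vec n) : vec n :=
  vsub (X x) (grad V x).

Definition sublevel {n} (U : vec n -> Prop) (V : vec n -> R) (c : R) (x : vec n) : Prop :=
  U x /\ 0 <= V x <= c.

Definition zero_set {n} (U : vec n -> Prop) (V : vec n -> R) (x : vec n) : Prop :=
  U x /\ V x = 0.

Definition critical_set_condition {n} (U : vec n -> Prop) X V c : Prop :=
  (forall x, U x -> 0 <= V x <= c -> ((forall i, grad V x i = 0) <-> V x = 0))
  \/
  (Cinf_field U X /\ Cinf U V /\
    forall x, U x -> (forall k i, lie X k (fun y => grad V y i) x = 0) ->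
      0 <= V x <= c -> V x = 0).

Section Gradient_system.

Variables (n : nat) (U : vec n -> Prop) (X : vec n -> vec n) (V : vec n -> R) (c : R).
Hypothesis Hsys : gradient_system U X V c.

Notation F := (flow_field X V).
Notation K := (sublevel U V c).

Lemma grad_V_partials : exists DV : Fin.t n -> vec n -> R,
  (forall i z, U z -> has_partial V i z (DV i z)) /\ (forall i, Ck 1 U (DV i)) /\
  (forall i z, U z -> grad V z i = DV i z).
Proof.
  destruct (gs_V Hsys) as [_ [D [H1 H2]]]. exists D. split; auto. split; auto.
  intros i z Hz. apply pderiv_eq. auto.
Qed.

Lemma V_continuous : continuous_on U V.
Proof. apply (Ck_continuous_on U 2), Hsys. Qed.

Lemma flow_field_C1 : Ck_field 1 U F.
Proof.
  intros i. destruct grad_V_partials as [DV [H1 [H2 H3]]].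
  destruct (gs_X Hsys i) as [HXc [DX [HX1 HX2]]].
  destruct (H2 i) as [HDc [DD [HD1 HD2]]].
  assert (E : forall y, U y -> X y i - DV i y = F y i).
  { intros y Hy. unfold flow_field, vsub. rewrite H3; auto. }
  split.
  - eapply continuous_on_ext. exact E. apply continuous_on_minus; auto.
  - exists (fun j z => DX j z - DD j z). split.
    + intros j z Hz. eapply has_partial_local; [apply (gs_open Hsys)|auto|exact E|].
      apply derivable_pt_lim_minus; [apply HX1|apply HD1]; auto.
    + intros j. apply continuous_on_minus; [apply HX2|apply HD2].
Qed.

Lemma sublevel_sub_U x : K x -> U x.
Proof. intros []; auto. Qed.

Lemma flow_field_lipschitz : exists L, L >= 0 /\ forall y z, K y -> K z ->
  norm (vsub (F z) (F y)) <= L * norm (vsub z y).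
Proof.
  apply (Ck_field1_lipschitz_on_compact U); auto using sublevel_sub_U, flow_field_C1.
  - apply (gs_open Hsys).
  - apply (gs_compact Hsys).
Qed.

Lemma flow_field_bounded : exists B, B >= 0 /\ forall x, K x -> norm (F x) <= B.
Proof.
  apply (continuous_field_bounded_on_compact U); auto using sublevel_sub_U.
  - apply (gs_open Hsys).
  - apply (gs_compact Hsys).
  - intros i. apply (Ck_continuous_on U 1), flow_field_C1.
Qed.

(* Along the flow, [dV/dt = grad V . (X - grad V) = - |grad V|^2] by orthogonality. *)
Lemma V_deriv_along_flow (y : R -> vec n) t : U (y t) ->
  (forall i, derivable_pt_lim (fun s => y s i) t (F (y t) i)) ->
  derivable_pt_lim (fun s => V (y s)) t (- sumsq (grad V (y t))).
Proof.
  intros Hy Hd. destruct grad_V_partials as [DV [H1 [H2 H3]]].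
  replace (- sumsq (grad V (y t))) with (fsum n (fun i => DV i (y t) * F (y t) i)).
  - apply (chain_rule U); auto. apply (gs_open Hsys).
    intros i. apply (Ck_continuous_on U 1), H2.
  - pose proof (gs_orth Hsys (y t) Hy) as H0. unfold dot in H0. unfold sumsq, flow_field, vsub.
    rewrite <- (Rplus_0_l (- _)), <- H0, <- fsum_opp, <- fsum_plus.
    apply fsum_ext. intros i. rewrite H3; auto. ring.
Qed.

Lemma V_nonincreasing_on (y : R -> vec n) a b : a <= b ->
  (forall s, a <= s <= b -> U (y s) /\
     forall i, derivable_pt_lim (fun r => y r i) s (F (y s) i)) ->
  V (y b) <= V (y a).
Proof.
  intros Hab Hs. destruct (Req_dec a b) as [->|Hne]. lra.
  destruct (MVT_cor2 (fun s => V (y s)) (fun s => - sumsq (grad V (y s))) a b)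
    as [t [E Ht]]. lra.
  { intros t Ht. destruct (Hs t ltac:(lra)) as [Hu Hd]. apply V_deriv_along_flow; auto. }
  pose proof (sumsq_nonneg (grad V (y t))). simpl in E. nra.
Qed.

Lemma V_nonincreasing x0 (y : R -> vec n) : is_solution U F x0 y ->
  forall a b, 0 <= a <= b -> V (y b) <= V (y a).
Proof.
  intros [_ Hs] a b Hab. apply V_nonincreasing_on; [lra|]. intros s Hsab. apply Hs. lra.
Qed.

Lemma solution_in_sublevel x0 (y : R -> vec n) : is_solution U F x0 y -> V x0 <= c ->
  forall t, 0 <= t -> K (y t) /\ V (y t) <= V x0.
Proof.
  intros Hs Hc t Ht. pose proof (V_nonincreasing x0 y Hs 0 t ltac:(lra)).
  destruct Hs as [E Hs]. rewrite E in H. destruct (Hs t Ht) as [Hu _].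
  pose proof (gs_V_nonneg Hsys _ Hu). repeat split; auto; lra.
Qed.

Lemma solutions_gronwall L x0 z0 (y z : R -> vec n) :
  L >= 0 ->
  (forall y z, K y -> K z -> norm (vsub (F z) (F y)) <= L * norm (vsub z y)) ->
  is_solution U F x0 y -> is_solution U F z0 z -> V x0 <= c -> V z0 <= c ->
  forall t, 0 <= t -> sumsq (vsub (y t) (z t)) <= sumsq (vsub x0 z0) * exp ((1 + L ^ 2) * t).
Proof.
  intros HL Hlip Hy Hz Hx0 Hz0 t Ht.
  set (u := fun s => sumsq (vsub (y s) (z s))).
  set (u' := fun s => fsum n (fun i => 2 * (y s i - z s i) * (F (y s) i - F (z s) i))).
  replace (sumsq (vsub x0 z0)) with (u 0) by (unfold u; rewrite (proj1 Hy), (proj1 Hz); auto).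
  apply (gronwall u u'); auto.
  - intros s Hs. apply derivable_pt_lim_fsum. intros i.
    destruct (proj2 Hy s Hs) as [_ Hy']. destruct (proj2 Hz s Hs) as [_ Hz'].
    unfold vsub. replace (2 * (y s i - z s i) * (F (y s) i - F (z s) i)) with
      (INR 2 * (y s i - z s i) ^ (pred 2) * (F (y s) i - F (z s) i)) by (simpl; ring).
    apply (derivable_pt_lim_comp (fun s => y s i - z s i) (fun a => a ^ 2)).
    + apply derivable_pt_lim_minus; auto.
    + apply derivable_pt_lim_pow.
  - intros s Hs. destruct (solution_in_sublevel x0 y Hy Hx0 s Hs) as [Ky _].
    destruct (solution_in_sublevel z0 z Hz Hz0 s Hs) as [Kz _].
    pose proof (Hlip (z s) (y s) Kz Ky).
    assert (sumsq (vsub (F (y s)) (F (z s))) <= L ^ 2 * u s).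
    { rewrite <- norm_sq. unfold u. rewrite <- norm_sq.
      pose proof (norm_nonneg (vsub (F (y s)) (F (z s)))).
      pose proof (norm_nonneg (vsub (y s) (z s))). nra. }
    assert (u' s <= u s + sumsq (vsub (F (y s)) (F (z s)))).
    { unfold u', u, sumsq. rewrite <- fsum_plus. apply fsum_le. intros i. unfold vsub.
      pose proof (pow2_ge_0 (y s i - z s i - (F (y s) i - F (z s) i))). nra. }
    lra.
Qed.

(* McShane-extend each component of [F] from the compact sublevel set to a globally
   Lipschitz field. *)
Lemma flow_field_lipschitz_extension x0 : K x0 ->
  exists G L, coord_lipschitz G L /\ L >= 0 /\ forall z, K z -> G z = F z.
Proof.
  intros Kx0.
  destruct flow_field_lipschitz as [L [HL Hlip]].
  destruct flow_field_bounded as [B [HB0 HB]].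
  assert (HBi : forall i y, K y -> - B <= F y i).
  { intros i y Hy. pose proof (HB y Hy). pose proof (Rabs_coord_le_norm (F y) i).
    pose proof (Rle_abs (- F y i)). rewrite Rabs_Ropp in *. lra. }
  exists (fun z i => mcshane K (fun y => F y i) L z), L. split; [|split; auto].
  - intros i z z'. apply (mcshane_lipschitz n K _ L B x0); auto.
  - intros z Hz. apply functional_extensionality; intros i.
    apply (mcshane_eq n K (fun y => F y i) L B x0); auto.
    intros y z' Hy Hz'. eapply Rle_trans.
    + apply (Rabs_coord_le_norm (vsub (F z') (F y)) i).
    + apply Hlip; auto.
Qed.

(* The global solution of the extended field never leaves the sublevel set, since [V]
   cannot increase along it while it is there, so it solves the original system. *)
Lemma flow_solution_exists x0 : U x0 -> V x0 < c -> exists y, is_solution U F x0 y.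
Proof.
  intros Hx0 Hc0.
  assert (Kx0 : K x0) by (pose proof (gs_V_nonneg Hsys x0 Hx0); split; auto; lra).
  destruct (flow_field_lipschitz_extension x0 Kx0) as (G & L & HG & HL & HGF).
  destruct (lipschitz_global_solution G L x0 HG HL) as [phi [Hp0 Hpd]].
  assert (Hpc : forall t j, continuity_pt (fun s => phi s j) t)
    by (intros t j; apply (derivable_continuous_pt _ _ (exist _ _ (Hpd t j)))).
  assert (Hsol : forall s, K (phi s) -> U (phi s) /\
      forall i, derivable_pt_lim (fun r => phi r i) s (F (phi s) i)).
  { intros s Ks. split; [apply Ks|]. intros i. rewrite <- (HGF _ Ks). apply Hpd. }
  assert (Hall : forall t, 0 <= t -> K (phi t)).
  { apply real_induction; [rewrite Hp0; auto| |].
    - intros t Ht Hbelow. apply NNPP. intros Hn.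
      destruct (compact_apart K (phi t) (gs_compact Hsys) Hn) as [r [Hr Hsep]].
      destruct (continuity_pt_vec phi t (Hpc t) r Hr) as [d [Hd Hdd]].
      set (s := t - Rmin d t / 2).
      assert (0 < Rmin d t) by (apply Rmin_glb_lt; lra).
      pose proof (Rmin_l d t). pose proof (Rmin_r d t).
      specialize (Hsep (phi s) (Hbelow s ltac:(unfold s; lra))).
      specialize (Hdd s ltac:(unfold s; rewrite Rabs_left by lra; lra)). lra.
    - intros t Ht Hupto.
      assert (Vt : V (phi t) <= V x0).
      { rewrite <- Hp0. apply V_nonincreasing_on; [lra|]. intros s Hs. apply Hsol, Hupto, Hs. }
      destruct (Hupto t ltac:(lra)) as [Ut _].
      destruct (gs_open Hsys _ Ut) as [r [Hr Hbr]].
      destruct (V_continuous (phi t) Ut (c - V x0)) as [d1 [Hd1 Hd1']]. lra.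
      destruct (continuity_pt_vec phi t (Hpc t) (Rmin r d1)) as [d [Hd Hdd]].
      { apply Rmin_glb_lt; lra. }
      exists d. split; auto. intros s Hs.
      assert (Hn : norm (vsub (phi s) (phi t)) < Rmin r d1) by (apply Hdd; rewrite Rabs_right; lra).
      pose proof (Rmin_l r d1). pose proof (Rmin_r r d1).
      assert (Us : U (phi s)) by (apply Hbr; lra).
      specialize (Hd1' (phi s) Us ltac:(lra)). apply Rabs_def2 in Hd1'.
      pose proof (gs_V_nonneg Hsys _ Us). split; auto; lra. }
  exists phi. split; [exact Hp0|]. intros t Ht. apply Hsol, Hall, Ht.
Qed.

Lemma V_const_critical p (y : R -> vec n) : is_solution U F p y -> V (y 1) = V p ->
  (forall s, 0 <= s <= 1 -> V (y s) = V p) /\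
  forall t, 0 < t < 1 -> forall i, grad V (y t) i = 0.
Proof.
  intros Hs E.
  assert (Hc : forall s, 0 <= s <= 1 -> V (y s) = V p).
  { intros s Hs'. pose proof (V_nonincreasing p y Hs 0 s ltac:(lra)).
    pose proof (V_nonincreasing p y Hs s 1 ltac:(lra)).
    rewrite (proj1 Hs) in H. lra. }
  split; auto. intros t Ht i.
  assert (D1 : derivable_pt_lim (fun s => V (y s)) t 0).
  { apply (derivable_pt_lim_locally_const _ t (Rmin t (1 - t))). apply Rmin_glb_lt; lra.
    intros s Hst. pose proof (Rmin_l t (1 - t)). pose proof (Rmin_r t (1 - t)).
    apply Rabs_def2 in Hst. rewrite !Hc; lra. }
  destruct (proj2 Hs t ltac:(lra)) as [Hu Hd].
  pose proof (uniqueness_limite _ _ _ _ D1 (V_deriv_along_flow y t Hu Hd)).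
  apply sumsq_eq0. lra.
Qed.

(* If [grad V] vanishes along the flow, the flow follows [X], so each [X^k dV/dx^i] is
   constant, hence zero, along it. *)
Lemma lie_derivatives_vanish p (y : R -> vec n) : Cinf_field U X -> Cinf U V ->
  is_solution U F p y -> (forall t, 0 < t < 1 -> forall i, grad V (y t) i = 0) ->
  forall k i t, 0 < t < 1 -> lie X k (fun z => grad V z i) (y t) = 0.
Proof.
  intros HX HV Hs Hg k i. induction k; intros t Ht; [simpl; auto|].
  set (g := lie X k (fun z => grad V z i)).
  assert (Cg : Cinf U g).
  { apply (Cinf_lie U X); auto. apply (gs_open Hsys). apply Cinf_pderiv; auto. apply (gs_open Hsys). }
  destruct (Cg 1%nat) as [_ [D [HD1 HD2]]].
  destruct (proj2 Hs t ltac:(lra)) as [Hu Hd].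
  assert (D1 : derivable_pt_lim (fun s => g (y s)) t 0).
  { apply (derivable_pt_lim_locally_const _ t (Rmin t (1 - t))). apply Rmin_glb_lt; lra.
    intros s Hst. pose proof (Rmin_l t (1 - t)). pose proof (Rmin_r t (1 - t)).
    apply Rabs_def2 in Hst. unfold g. rewrite !IHk; lra. }
  pose proof (chain_rule U g D y (fun j => F (y t) j) t (gs_open Hsys) HD1 HD2 Hu Hd) as D2.
  pose proof (uniqueness_limite _ _ _ _ D1 D2) as E.
  simpl. fold g. rewrite E. unfold dot. apply fsum_ext. intros j.
  unfold flow_field, vsub. rewrite Hg by auto. unfold grad.
  rewrite (pderiv_eq g j (y t) (D j (y t))) by auto. ring.
Qed.

Lemma V_strictly_decreases p (y : R -> vec n) : critical_set_condition U X V c ->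
  U p -> 0 < V p <= c -> is_solution U F p y -> V (y 1) < V p.
Proof.
  intros HA Hp Hvp Hy.
  pose proof (V_nonincreasing p y Hy 0 1 ltac:(lra)) as Hle. rewrite (proj1 Hy) in Hle.
  destruct (Rle_lt_or_eq_dec _ _ Hle) as [|E]; auto. exfalso.
  destruct (V_const_critical p y Hy E) as [Hcst Hg].
  set (q := y (1 / 2)).
  assert (Hq : U q) by (apply (proj2 Hy (1/2) ltac:(lra))).
  assert (Vq : V q = V p) by (apply Hcst; lra).
  assert (Vq' : 0 <= V q <= c) by (pose proof (gs_V_nonneg Hsys q Hq); lra).
  enough (V q = 0) by lra.
  destruct HA as [A3|[HX [HV A3']]].
  - apply A3; auto. apply Hg. lra.
  - apply A3'; auto. intros k i. apply (lie_derivatives_vanish p y); auto. lra.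
Qed.

(* By continuous dependence on initial data (Gronwall), the strict decrease at [p]
   persists, by a fixed amount, for nearby initial points. *)
Lemma descent_near_point p : critical_set_condition U X V c -> U p -> 0 < V p <= c / 2 ->
  exists r m, r > 0 /\ m > 0 /\ forall x0 y, norm (vsub x0 p) < r -> V x0 <= c / 2 ->
    is_solution U F x0 y -> V (y 1) <= V x0 - m.
Proof.
  intros HA Hp Hvp. pose proof (gs_c_pos Hsys) as Hc.
  destruct (flow_solution_exists p Hp ltac:(lra)) as [yi Hyi].
  pose proof (V_strictly_decreases p yi HA Hp ltac:(lra) Hyi) as Hd.
  set (d := V p - V (yi 1)).
  destruct flow_field_lipschitz as [L [HL Hlip]].
  set (E := exp ((1 + L ^ 2) * 1)).
  assert (HE : 0 < E) by apply exp_pos.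
  destruct (V_continuous p Hp (d / 4)) as [d1 [Hd1 H1]]. unfold d; lra.
  assert (Hy1 : U (yi 1)) by (apply (proj2 Hyi 1 ltac:(lra))).
  destruct (V_continuous (yi 1) Hy1 (d / 4)) as [d2 [Hd2 H2]]. unfold d; lra.
  exists (Rmin d1 (d2 / (E + 1))), (d / 2). split.
  { apply Rmin_glb_lt; auto. apply Rdiv_lt_0_compat; lra. }
  split. unfold d; lra.
  intros x0 y Hx0 Hvx0 Hy.
  assert (Ux0 : U x0) by (rewrite <- (proj1 Hy); apply (proj2 Hy 0 ltac:(lra))).
  pose proof (Rmin_l d1 (d2 / (E + 1))). pose proof (Rmin_r d1 (d2 / (E + 1))).
  pose proof (solutions_gronwall L x0 p y yi HL Hlip Hy Hyi ltac:(lra) ltac:(lra) 1 ltac:(lra)) as G.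
  fold E in G.
  assert (Hn : norm (vsub (y 1) (yi 1)) < d2).
  { apply norm_lt_sq. lra. eapply Rle_lt_trans. exact G.
    rewrite <- norm_sq. pose proof (norm_nonneg (vsub x0 p)).
    assert (norm (vsub x0 p) ^ 2 <= (d2 / (E + 1)) ^ 2) by (apply pow_incr; lra).
    assert ((d2 / (E + 1)) ^ 2 * E < d2 ^ 2).
    { replace ((d2 / (E + 1)) ^ 2 * E) with (d2 ^ 2 * (E / (E + 1) ^ 2)) by (field; lra).
      assert (E / (E + 1) ^ 2 < 1).
      { apply (Rmult_lt_reg_r ((E + 1) ^ 2)). nra. field_simplify; nra. }
      assert (0 < d2 ^ 2) by nra. nra. }
    nra. }
  assert (Uy1 : U (y 1)) by (apply (proj2 Hy 1 ltac:(lra))).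
  specialize (H2 (y 1) Uy1 Hn). specialize (H1 x0 Ux0 ltac:(lra)).
  apply Rabs_def2 in H1. apply Rabs_def2 in H2. unfold d in *. lra.
Qed.

Lemma V_open_condition_near x (Q : R -> Prop) : U x ->
  (forall v, Q v -> exists e, e > 0 /\ forall w, Rabs (w - v) < e -> Q w) -> Q (V x) ->
  exists r, r > 0 /\ forall y, norm (vsub y x) < r -> U y /\ Q (V y).
Proof.
  intros Hx HQ Qx. destruct (HQ _ Qx) as [e [He He']].
  destruct (gs_open Hsys x Hx) as [r0 [Hr0 Hb]].
  destruct (V_continuous x Hx e He) as [d [Hd Hd']].
  exists (Rmin r0 d). split. apply Rmin_glb_lt; auto.
  intros y Hy. pose proof (Rmin_l r0 d). pose proof (Rmin_r r0 d).
  assert (U y) by (apply Hb; lra). split; auto. apply He', Hd'; auto. lra.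
Qed.

Lemma V_gt_near x a : U x -> a < V x ->
  exists r, r > 0 /\ forall y, norm (vsub y x) < r -> U y /\ a < V y.
Proof.
  intros Hx Ha. apply (V_open_condition_near x (fun v => a < v)); auto.
  intros v Hv. exists (v - a). split. lra. intros w Hw. apply Rabs_def2 in Hw. lra.
Qed.

Lemma V_lt_near x a : U x -> V x < a ->
  exists r, r > 0 /\ forall y, norm (vsub y x) < r -> U y /\ V y < a.
Proof.
  intros Hx Ha. apply (V_open_condition_near x (fun v => v < a)); auto.
  intros v Hv. exists (a - v). split. lra. intros w Hw. apply Rabs_def2 in Hw. lra.
Qed.

Lemma zero_set_compact : is_compact (zero_set U V).
Proof.
  apply (is_compact_ext (fun x => K x /\ V x <= 0)).
  { intros x. pose proof (gs_c_pos Hsys). unfold zero_set, sublevel. split.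
    - intros [[Hu _] Hv]. pose proof (gs_V_nonneg Hsys x Hu). split; auto; lra.
    - intros [Hu Hv]. rewrite Hv. repeat split; auto; lra. }
  apply is_compact_restrict; [apply (gs_compact Hsys)|].
  intros x [Hx _] Hn. destruct (V_gt_near x 0 Hx) as [r [Hr Hr']]; [lra|].
  exists r. split; auto. intros y Hy. pose proof (proj2 (Hr' y Hy)). lra.
Qed.

Lemma zero_set_nbhd_V_small beta : beta > 0 ->
  exists d, d > 0 /\ forall x0, nbhd (zero_set U V) d x0 -> U x0 /\ V x0 < beta.
Proof.
  intros Hb.
  destruct (compact_uniform_nbhd _ (fun _ y => U y /\ V y < beta) zero_set_compact)
    as (d & m & Hd & Hm & HL).
  - auto.
  - intros a [Ha Va]. destruct (V_lt_near a beta Ha) as [r [Hr Hr']]; [lra|].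
    exists r, 1. split; auto. split; [lra|auto].
  - exists d. split; auto. intros x0 [a [Ha Hxa]]. apply (HL a x0 Ha Hxa).
Qed.

Lemma V_small_near_zero_set eps : eps > 0 ->
  exists eta, eta > 0 /\ forall x, K x -> V x < eta -> nbhd (zero_set U V) eps x.
Proof.
  intros He.
  set (C := fun x => K x /\ ~ nbhd (zero_set U V) eps x).
  assert (HC : is_compact C).
  { apply is_compact_restrict; [apply (gs_compact Hsys)|]. intros x _ Hn. apply NNPP in Hn.
    destruct Hn as [a [Ha Hxa]]. exists (eps - norm (vsub x a)). split. lra.
    intros y Hy Hn. apply Hn. exists a. split; auto. pose proof (norm_triang y x a). lra. }
  destruct (compact_uniform_nbhd C (fun m y => U y -> m <= V y) HC) as (d & m & Hd & Hm & HL).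
  - intros m m' y Hm' Hy Uy. specialize (Hy Uy). lra.
  - intros x [[Hx Hvx] Hn]. assert (0 < V x).
    { destruct (Req_dec (V x) 0) as [E|]; [|lra]. exfalso; apply Hn.
      exists x. split. split; auto. rewrite norm_vsub_diag; lra. }
    destruct (V_gt_near x (V x / 2) Hx) as [r [Hr Hr']]; [lra|].
    exists r, (V x / 2). split; auto. split. lra. intros y Hy _. left. apply Hr', Hy.
  - exists m. split; auto. intros x Hx Hv. apply NNPP. intros Hn.
    specialize (HL x x (conj Hx Hn) ltac:(rewrite norm_vsub_diag; lra) (proj1 Hx)). lra.
Qed.

Lemma uniform_unit_descent eta : critical_set_condition U X V c -> eta > 0 ->
  exists m, m > 0 /\ forall q y, U q -> eta <= V q <= c / 2 ->
    is_solution U F q y -> V (y 1) <= V q - m.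
Proof.
  intros HA Heta. pose proof (gs_c_pos Hsys) as Hc.
  set (C := fun x => K x /\ (U x /\ eta <= V x <= c / 2)).
  assert (HC : is_compact C).
  { apply is_compact_restrict; [apply (gs_compact Hsys)|]. intros x [Hx _] Hn.
    destruct (Rlt_le_dec (V x) eta) as [Hlt|Hge].
    - destruct (V_lt_near x eta Hx Hlt) as [r [Hr Hr']].
      exists r. split; auto. intros y Hy [_ Hy2]. destruct (Hr' y Hy). lra.
    - assert (c / 2 < V x) by (apply Rnot_le_lt; intro Hle; apply Hn; split; auto; lra).
      destruct (V_gt_near x (c / 2) Hx) as [r [Hr Hr']]; auto.
      exists r. split; auto. intros y Hy [_ Hy2]. destruct (Hr' y Hy). lra. }
  destruct (compact_uniform_nbhd C (fun m q => forall x0 y, norm (vsub x0 q) < m ->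
      V x0 <= c / 2 -> is_solution U F x0 y -> V (y 1) <= V x0 - m) HC)
    as (d & m & Hd & Hm & HL).
  - intros m m' q Hm' Hq x0 y Hx0 Hv Hy. specialize (Hq x0 y ltac:(lra) Hv Hy). lra.
  - intros p [_ [Hp Hvp]]. destruct (descent_near_point p HA Hp ltac:(lra)) as (r & mu & Hr & Hmu & HK).
    exists (r / 2), (Rmin (r / 2) mu). split. lra. split. apply Rmin_glb_lt; lra.
    intros q Hq x0 y Hx0 Hv Hy. pose proof (Rmin_l (r / 2) mu). pose proof (Rmin_r (r / 2) mu).
    specialize (HK x0 y ltac:(pose proof (norm_triang x0 q p); lra) Hv Hy). lra.
  - exists m. split; auto. intros q y Hq Hv Hy.
    assert (Cq : C q) by (repeat split; auto; lra).
    apply (HL q q Cq); auto; rewrite ?norm_vsub_diag; lra.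
Qed.

(* Each unit of time above level [eta] costs at least [m] of the budget [V <= c/2]. *)
Lemma uniform_descent_time eta : critical_set_condition U X V c -> eta > 0 ->
  exists N : nat, forall x0 y, V x0 <= c / 2 -> is_solution U F x0 y -> V (y (INR N)) < eta.
Proof.
  intros HA Heta. pose proof (gs_c_pos Hsys) as Hc.
  destruct (uniform_unit_descent eta HA Heta) as [m [Hm Hstep]].
  destruct (INR_archimed m (c / 2)) as [N HN]; [lra|].
  exists N. intros x0 y Hx0 Hy.
  assert (Hind : forall k : nat, V (y (INR k)) < eta \/ V (y (INR k)) <= V x0 - INR k * m).
  { induction k.
    - right. simpl. rewrite (proj1 Hy). lra.
    - pose proof (solution_shift _ _ _ _ (INR k) Hy (pos_INR k)) as Hs.
      pose proof (V_nonincreasing x0 y Hy (INR k) (INR (S k))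
        ltac:(split; [apply pos_INR|rewrite S_INR; lra])).
      destruct IHk as [IH|IH]; [left; lra|].
      destruct (Rlt_le_dec (V (y (INR k))) eta); [left; lra|].
      right. destruct (solution_in_sublevel x0 y Hy ltac:(lra) (INR k) (pos_INR k)) as [[Uk _] Vk].
      specialize (Hstep (y (INR k)) _ Uk ltac:(lra) Hs).
      cbv beta in Hstep. rewrite S_INR. lra. }
  destruct (Hind N) as [|Hb]; auto.
  destruct (solution_in_sublevel x0 y Hy ltac:(lra) (INR N) (pos_INR N)) as [[_ [HV0 _]] _].
  lra.
Qed.

Lemma zero_set_positively_invariant : positively_invariant U F (zero_set U V).
Proof.
  pose proof (gs_c_pos Hsys). intros x0 [Ux0 Vx0]. split.
  - apply flow_solution_exists; auto. lra.
  - intros y Hy t Ht.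
    destruct (solution_in_sublevel x0 y Hy ltac:(lra) t Ht) as [[Uy [Vy _]] Vle].
    split; auto. lra.
Qed.

Lemma zero_set_uniformly_stable : uniformly_stable U F (zero_set U V).
Proof.
  pose proof (gs_c_pos Hsys). intros eps Heps.
  destruct (V_small_near_zero_set eps Heps) as [eta [Heta Hnear]].
  destruct (zero_set_nbhd_V_small (Rmin eta c)) as [d [Hd Hsmall]].
  { apply Rmin_glb_lt; lra. }
  exists d. split; auto. intros x0 Hx0. destruct (Hsmall x0 Hx0) as [Ux0 Vx0].
  pose proof (Rmin_l eta c). pose proof (Rmin_r eta c).
  split; [apply flow_solution_exists; auto; lra|].
  intros y Hy t Ht. destruct (solution_in_sublevel x0 y Hy ltac:(lra) t Ht) as [Ky Vle].
  apply Hnear; auto. lra.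
Qed.

Lemma zero_set_uniformly_attracting : critical_set_condition U X V c ->
  exists del0, del0 > 0 /\ forall eps, eps > 0 -> exists T, T > 0 /\
    forall x0, nbhd (zero_set U V) del0 x0 ->
      all_sol U F x0 (fun x => forall t, T <= t -> nbhd (zero_set U V) eps (x t)).
Proof.
  intros HA. pose proof (gs_c_pos Hsys).
  destruct (zero_set_nbhd_V_small (c / 2)) as [d0 [Hd0 Hsmall]]; [lra|].
  exists d0. split; auto. intros eps Heps.
  destruct (V_small_near_zero_set eps Heps) as [eta [Heta Hnear]].
  destruct (uniform_descent_time eta HA Heta) as [N HN].
  pose proof (pos_INR N).
  exists (INR N + 1). split; [lra|].
  intros x0 Hx0. destruct (Hsmall x0 Hx0) as [Ux0 Vx0].
  split; [apply flow_solution_exists; auto; lra|].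
  intros y Hy t Ht.
  destruct (solution_in_sublevel x0 y Hy ltac:(lra) t ltac:(lra)) as [Ky _].
  pose proof (V_nonincreasing x0 y Hy (INR N) t ltac:(lra)).
  pose proof (HN x0 y ltac:(lra) Hy).
  apply Hnear; auto. lra.
Qed.

End Gradient_system.

Theorem lemma8 (n : nat) (U : vec n -> Prop) (X : vec n -> vec n)
    (V : vec n -> R) (c : R) :
  is_open U ->
  Ck_field 1 U X ->
  Ck 2 U V ->
  (* A1 *)
  (forall x, U x -> 0 <= V x) ->
  (exists x, U x /\ V x = 0) ->
  (forall x, U x -> dot (grad V x) (X x) = 0) ->
  (* A2 *)
  c > 0 ->
  is_compact (fun x => U x /\ 0 <= V x <= c) ->
  (* A3, or A3' with X and V smooth *)
  ((forall x, U x -> 0 <= V x <= c ->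
      ((forall i, grad V x i = 0) <-> V x = 0))
   \/
   (Cinf_field U X /\ Cinf U V /\
    forall x, U x ->
      (forall k i, lie X k (fun y => grad V y i) x = 0) ->
      0 <= V x <= c -> V x = 0)) ->
  uniformly_asymptotically_stable U (fun x => vsub (X x) (grad V x))
    (fun x => U x /\ V x = 0).
Proof.
  intros HU HX HV HV0 _ Horth Hc HK HA.
  assert (Hsys : gradient_system U X V c) by (constructor; auto).
  split; [|split].
  - exact (zero_set_positively_invariant n U X V c Hsys).
  - exact (zero_set_uniformly_stable n U X V c Hsys).
  - exact (zero_set_uniformly_attracting n U X V c Hsys HA).
Qed.
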